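(* Assume only the weight regularity condition (so $\mathbb E[W^2]<\infty$). Then \[ \lim_{\beta\nearrow\beta_c}\widetilde\chi(\beta,0^+)(\beta_c-\beta)=\frac{\mathbb E[W]^2}{\mathbb E[W^2]}\tanh(\beta_c), \] so in particular $\boldsymbol\gamma=1$.
   Context: Weights $w_i>0$, $W_N=w_{U_N}$, $U_N$ uniform on $[N]$. Weight regularity: $W_N\to W$ in distribution, $\mathbb E[W_N^2]\to\mathbb E[W^2]<\infty$, $\mathbb E[W]>0$. $\nu=\mathbb E[W^2]/\mathbb E[W]$, $\beta_c={\rm asinh}(1/\nu)$, $\alpha(\beta)=\sqrt{\sinh(\beta)/\mathbb E[W]}$. For $B>0$, $z^*(\beta,B)$ is the unique positive solution of $z=\mathbb E[\tanh(\alpha(\beta)Wz+B)\alpha(\beta)W]$ (for $\beta<\beta_c$, $z^*(\beta,B)\to0$ as $B\searrow0$), $\widetilde M(\beta,B)=\mathbb E[\tanh(\alpha(\beta)Wz^*+B)]$ is the limiting annealed magnetization of the Ising model on the generalized random graph, $\widetilde\chi(\beta,B)=\partial_B\widetilde M(\beta,B)$ the limiting annealed susceptibility, and $\widetilde\chi(\beta,0^+)=\lim_{B\searrow0}\widetilde\chi(\beta,B)$. The critical exponent $\boldsymbol\gamma$ is defined by $\widetilde\chi(\beta,0^+)\asymp(\beta_c-\beta)^{-\boldsymbol\gamma}$ as $\beta\nearrow\beta_c$. *)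

From Stdlib Require Import Reals Lra ClassicalEpsilon.
Open Scope R_scope.


(* The law of the limiting weight W >= 0 is represented by its quantile
   function Q : (0,1) -> [0,oo), nondecreasing: W has the law of Q(U),
   U uniform on (0,1).  Hence E[g(W)] = \int_0^1 g(Q u) du, an (in general
   improper at 0 and 1) Riemann integral. *)
Definition is_quantile (Q : R -> R) : Prop :=
  (forall u, 0 < u < 1 -> 0 <= Q u) /\
  (forall u v, 0 < u -> u <= v -> v < 1 -> Q u <= Q v).

Definition improper01 (h : R -> R) (l : R) : Prop :=
  (forall a b, 0 < a -> a <= b -> b < 1 -> inhabited (Riemann_integrable h a b)) /\
  (forall eps, 0 < eps -> exists delta, 0 < delta /\
     forall a b, 0 < a < delta -> 1 - delta < b < 1 ->
       forall pr : Riemann_integrable h a b, Rabs (RiemannInt pr - l) < eps).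

Definition Expect (Q : R -> R) (g : R -> R) : R :=
  epsilon (inhabits 0) (fun l => improper01 (fun u => g (Q u)) l).

Definition EW (Q : R -> R) : R := Expect Q (fun w => w).
Definition EW2 (Q : R -> R) : R := Expect Q (fun w => w ^ 2).

Definition nu (Q : R -> R) : R := EW2 Q / EW Q.
Definition beta_c (Q : R -> R) : R := arcsinh (/ nu Q).
Definition alpha (Q : R -> R) (beta : R) : R := sqrt (sinh beta / EW Q).

Definition zstar (Q : R -> R) (beta B : R) : R :=
  epsilon (inhabits 0) (fun z => 0 < z /\
    z = Expect Q (fun w => tanh (alpha Q beta * w * z + B) * (alpha Q beta * w))).

Definition Mtilde (Q : R -> R) (beta B : R) : R :=
  Expect Q (fun w => tanh (alpha Q beta * w * zstar Q beta B + B)).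

(* For 0 < beta < beta_c put a = alpha(beta); then a^2 E[W^2] < 1, so z |-> F(z, B) =
   E[tanh(a W z + B) a W] is a contraction, and its positive fixed point z*(B) is Lipschitz
   in B and O(B).  Expanding tanh to first order (the remainder is quadratic in the
   increment on the bulk of W and linear on its tail, whose second moment is small) gives the
   implicit-function formula
     chi = E[sech^2] + E[sech^2 a W]^2 / (1 - E[sech^2 (a W)^2])
   for d/dB M(z*(B), B); as B -> 0 also z*(B) -> 0, hence
     chi(beta, 0+) = 1 + a^2 E[W]^2 / (1 - a^2 E[W^2]) = 1 + sinh(beta) E[W] / (1 - nu sinh(beta)).
   Finally 1 - nu sinh(beta) = nu (sinh(beta_c) - sinh(beta)) ~ nu cosh(beta_c) (beta_c - beta). *)

From Coquelicot Require Import Coquelicot.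
From Stdlib Require Import Reals Lra ClassicalEpsilon.
Open Scope R_scope.

(** * The hyperbolic tangent *)

Lemma tanh_exp x : tanh x = (exp x * exp x - 1) / (exp x * exp x + 1).
Proof.
  unfold tanh, sinh, cosh. rewrite exp_Ropp. assert (H := exp_pos x).
  field. split; nra.
Qed.

Lemma tanh_bound x : -1 < tanh x < 1.
Proof.
  rewrite tanh_exp. assert (H := exp_pos x). set (e := exp x) in *.
  assert (0 < e * e + 1) by nra.
  assert (Hq : (e*e-1)/(e*e+1) * (e*e+1) = e*e-1) by (field; lra).
  set (q := (e*e-1)/(e*e+1)) in *. split; nra.
Qed.

Lemma Rabs_tanh_le1 x : Rabs (tanh x) <= 1.
Proof. pose proof (tanh_bound x). apply Rabs_le; lra. Qed.

Lemma sech2_bound x : 0 <= 1 - tanh x ^ 2 <= 1.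
Proof. pose proof (tanh_bound x). nra. Qed.

Lemma tanh_0 : tanh 0 = 0.
Proof. rewrite tanh_exp, exp_0. field. Qed.

Lemma tanh_opp x : tanh (- x) = - tanh x.
Proof.
  unfold tanh, sinh, cosh. rewrite Ropp_involutive.
  assert (H1 := exp_pos x). assert (H2 := exp_pos (- x)). field. lra.
Qed.

Lemma cosh_ge1 x : 1 <= cosh x.
Proof.
  unfold cosh. rewrite exp_Ropp. assert (H := exp_pos x). set (e := exp x) in *.
  assert (e + / e - 2 = (e - 1) ^ 2 / e) by (field; lra).
  assert (0 <= (e - 1) ^ 2 / e) by (apply Rle_mult_inv_pos; [apply pow2_ge_0|lra]). lra.
Qed.

Lemma derivable_pt_lim_tanh x : derivable_pt_lim tanh x (1 - tanh x ^ 2).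
Proof.
  assert (Hc : 0 < cosh x) by (pose proof (cosh_ge1 x); lra).
  replace (1 - tanh x ^ 2) with ((cosh x * cosh x - sinh x * sinh x) / (cosh x)²)
    by (unfold tanh, Rsqr; field; lra).
  apply derivable_pt_lim_div; [apply derivable_pt_lim_sinh|apply derivable_pt_lim_cosh|lra].
Qed.

Lemma tanh_lipschitz x y : Rabs (tanh x - tanh y) <= Rabs (x - y).
Proof.
  assert (Hlt : forall x y, x < y -> Rabs (tanh y - tanh x) <= Rabs (y - x)).
  { clear x y; intros x y Hxy.
    destruct (MVT_cor2 tanh (fun t => 1 - tanh t ^ 2) x y Hxy
                (fun c _ => derivable_pt_lim_tanh c)) as [c [-> _]].
    rewrite Rabs_mult, (Rabs_right (1 - _)) by (pose proof (sech2_bound c); lra).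
    pose proof (sech2_bound c). pose proof (Rabs_pos (y - x)). nra. }
  destruct (Rtotal_order x y) as [Hxy|[->|Hxy]].
  - rewrite Rabs_minus_sym, (Rabs_minus_sym x). auto.
  - rewrite !Rminus_diag, Rabs_R0. lra.
  - auto.
Qed.

Lemma Rabs_tanh_le x : Rabs (tanh x) <= Rabs x.
Proof. pose proof (tanh_lipschitz x 0). rewrite tanh_0, !Rminus_0_r in H. exact H. Qed.

Lemma tanh_pos x : 0 < x -> 0 < tanh x.
Proof.
  intro Hx. rewrite tanh_exp. assert (1 < exp x) by (rewrite <- exp_0; apply exp_increasing; lra).
  apply Rdiv_lt_0_compat; nra.
Qed.

Lemma tanh_nonneg x : 0 <= x -> 0 <= tanh x.
Proof. intros [Hx|<-]; [left; apply tanh_pos; lra|rewrite tanh_0; lra]. Qed.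

Lemma tanh_sqr_le x : tanh x ^ 2 <= x ^ 2.
Proof.
  pose proof (Rabs_tanh_le x). rewrite <- (pow2_abs x), <- (pow2_abs (tanh x)).
  pose proof (Rabs_pos (tanh x)). nra.
Qed.

Lemma tanh_sqr_le_abs x : tanh x ^ 2 <= Rabs x.
Proof.
  pose proof (Rabs_tanh_le x). pose proof (Rabs_tanh_le1 x).
  rewrite <- (pow2_abs (tanh x)). pose proof (Rabs_pos (tanh x)). nra.
Qed.

Lemma tanh_ge_sub_sqr d : 0 <= d <= 1 -> d - d ^ 2 <= tanh d.
Proof.
  intros [[H0|<-] H1]; [|rewrite tanh_0; lra].
  set (h := fun t => tanh t - t + t ^ 2).
  assert (Hd : forall c, 0 <= c <= d -> derivable_pt_lim h c (1 - tanh c ^ 2 - 1 + 2 * c)).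
  { intros c _. unfold h.
    apply (derivable_pt_lim_plus (fun t => tanh t - t) (fun t => t ^ 2)).
    - apply (derivable_pt_lim_minus tanh (fun t => t)).
      + apply derivable_pt_lim_tanh.
      + apply derivable_pt_lim_id.
    - replace (2 * c) with (INR 2 * c ^ (2 - 1)) by (simpl; ring). apply derivable_pt_lim_pow. }
  destruct (MVT_cor2 h _ 0 d H0 Hd) as [c [Hc [Hc1 Hc2]]].
  unfold h in Hc. rewrite tanh_0 in Hc.
  assert (Hr : 0 <= (1 - tanh c ^ 2 - 1 + 2 * c) * (d - 0)).
  { apply Rmult_le_pos; [|lra].
    pose proof (Rabs_tanh_le c). pose proof (tanh_nonneg c ltac:(lra)).
    rewrite (Rabs_right (tanh c)), (Rabs_right c) in H by lra. nra. }
  lra.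
Qed.

Lemma Rabs_tanh_sub_id d : Rabs (tanh d - d) <= d ^ 2.
Proof.
  assert (Hpos : forall d, 0 <= d -> Rabs (tanh d - d) <= d ^ 2).
  { clear d; intros d Hd. pose proof (Rabs_tanh_le d). pose proof (tanh_nonneg d Hd).
    rewrite (Rabs_right d), (Rabs_right (tanh d)) in H by lra.
    rewrite Rabs_left1 by lra.
    destruct (Rle_dec d 1); [pose proof (tanh_ge_sub_sqr d ltac:(lra)); lra | nra]. }
  destruct (Rle_dec 0 d); auto.
  replace (tanh d - d) with (- (tanh (- d) - (- d))) by (rewrite tanh_opp; ring).
  rewrite Rabs_Ropp. replace (d ^ 2) with ((- d) ^ 2) by ring. apply Hpos. lra.
Qed.

Lemma tanh_sub x y : tanh y - tanh x = tanh (y - x) * (1 - tanh x * tanh y).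
Proof.
  rewrite !tanh_exp.
  replace (exp (y - x)) with (exp y * / exp x) by (unfold Rminus; rewrite exp_plus, exp_Ropp; ring).
  assert (H1 := exp_pos x). assert (H2 := exp_pos y).
  set (X := exp x) in *. set (Y := exp y) in *. field. repeat split; nra.
Qed.

(* From tanh (x + D) - tanh x = tanh D (1 - tanh x tanh (x + D)). *)
Lemma tanh_taylor2 x D :
  Rabs (tanh (x + D) - tanh x - (1 - tanh x ^ 2) * D) <= 2 * D ^ 2.
Proof.
  rewrite tanh_sub. replace (x + D - x) with D by ring.
  set (T := tanh x). set (U := tanh (x + D)). set (t := tanh D).
  replace (t * (1 - T * U) - (1 - T ^ 2) * D) with ((t - D) * (1 - T ^ 2) - T * t * (U - T)) by ring.
  assert (HUT : Rabs (U - T) <= Rabs D).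
  { pose proof (tanh_lipschitz (x + D) x). replace (x + D - x) with D in H by ring. exact H. }
  pose proof (Rabs_tanh_sub_id D) as Ht. pose proof (Rabs_tanh_le D) as Ht'. fold t in Ht, Ht'.
  pose proof (Rabs_tanh_le1 x) as HT. pose proof (sech2_bound x) as HT2. fold T in HT, HT2.
  eapply Rle_trans; [apply Rabs_triang|]. rewrite Rabs_Ropp, !Rabs_mult.
  rewrite (Rabs_right (1 - T ^ 2)) by lra.
  assert (HD : Rabs D * Rabs D = D ^ 2) by (rewrite <- Rabs_mult, Rabs_right; [ring|nra]).
  pose proof (Rabs_pos (t - D)). pose proof (Rabs_pos T). pose proof (Rabs_pos t).
  pose proof (Rabs_pos (U - T)). pose proof (Rabs_pos D).
  assert (Rabs T * Rabs t * Rabs (U - T) <= 1 * Rabs D * Rabs D)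
    by (apply Rmult_le_compat; try apply Rmult_le_compat; nra).
  nra.
Qed.

Lemma tanh_taylor1 x D :
  Rabs (tanh (x + D) - tanh x - (1 - tanh x ^ 2) * D) <= 2 * Rabs D.
Proof.
  pose proof (tanh_lipschitz (x + D) x). replace (x + D - x) with D in H by ring.
  assert (Rabs ((1 - tanh x ^ 2) * D) <= Rabs D).
  { rewrite Rabs_mult, Rabs_right by (pose proof (sech2_bound x); lra).
    pose proof (sech2_bound x). pose proof (Rabs_pos D). nra. }
  unfold Rminus at 1. eapply Rle_trans; [apply Rabs_triang|]. rewrite Rabs_Ropp. lra.
Qed.

(** * Locally Lipschitz functions *)

Definition locally_lipschitz (g : R -> R) : Prop :=
  forall m M, m <= M -> exists L, 0 <= L /\
    forall x y, m <= x <= M -> m <= y <= M -> Rabs (g x - g y) <= L * Rabs (x - y).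

Lemma locally_lipschitz_bounded g m M : locally_lipschitz g -> m <= M ->
  exists K, 0 <= K /\ forall x, m <= x <= M -> Rabs (g x) <= K.
Proof.
  intros H HmM. destruct (H m M HmM) as [L [HL HL1]].
  exists (Rabs (g m) + L * (M - m)). split; [pose proof (Rabs_pos (g m)); nra|].
  intros x Hx. specialize (HL1 x m Hx ltac:(lra)). rewrite (Rabs_right (x - m)) in HL1 by lra.
  pose proof (Rabs_triang_inv (g x) (g m)).
  assert (L * (x - m) <= L * (M - m)) by (apply Rmult_le_compat_l; lra). lra.
Qed.

Lemma locally_lipschitz_const c : locally_lipschitz (fun _ => c).
Proof. intros m M _. exists 0. split; [lra|]. intros. rewrite Rminus_diag, Rabs_R0. lra. Qed.

Lemma locally_lipschitz_id : locally_lipschitz (fun x => x).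
Proof. intros m M _. exists 1. split; [lra|]. intros. lra. Qed.

Lemma locally_lipschitz_plus f g :
  locally_lipschitz f -> locally_lipschitz g -> locally_lipschitz (fun x => f x + g x).
Proof.
  intros Hf Hg m M H. destruct (Hf m M H) as [L1 [H1 H1']]. destruct (Hg m M H) as [L2 [H2 H2']].
  exists (L1 + L2). split; [lra|]. intros x y Hx Hy.
  replace (f x + g x - (f y + g y)) with ((f x - f y) + (g x - g y)) by ring.
  eapply Rle_trans; [apply Rabs_triang|]. specialize (H1' x y Hx Hy). specialize (H2' x y Hx Hy). lra.
Qed.

Lemma locally_lipschitz_mult f g :
  locally_lipschitz f -> locally_lipschitz g -> locally_lipschitz (fun x => f x * g x).
Proof.
  intros Hf Hg m M H. destruct (Hf m M H) as [L1 [H1 H1']]. destruct (Hg m M H) as [L2 [H2 H2']].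
  destruct (locally_lipschitz_bounded f m M Hf H) as [K1 [HK1 HK1']].
  destruct (locally_lipschitz_bounded g m M Hg H) as [K2 [HK2 HK2']].
  exists (K1 * L2 + K2 * L1). split; [nra|]. intros x y Hx Hy.
  replace (f x * g x - f y * g y) with (f x * (g x - g y) + g y * (f x - f y)) by ring.
  eapply Rle_trans; [apply Rabs_triang|]. rewrite !Rabs_mult.
  specialize (H1' x y Hx Hy). specialize (H2' x y Hx Hy). specialize (HK1' x Hx). specialize (HK2' y Hy).
  pose proof (Rabs_pos (f x)). pose proof (Rabs_pos (g y)). pose proof (Rabs_pos (x - y)).
  pose proof (Rabs_pos (g x - g y)). pose proof (Rabs_pos (f x - f y)).
  assert (Rabs (f x) * Rabs (g x - g y) <= K1 * (L2 * Rabs (x - y))) by (apply Rmult_le_compat; lra).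
  assert (Rabs (g y) * Rabs (f x - f y) <= K2 * (L1 * Rabs (x - y))) by (apply Rmult_le_compat; lra).
  nra.
Qed.

Lemma locally_lipschitz_comp h f :
  locally_lipschitz h -> locally_lipschitz f -> locally_lipschitz (fun x => h (f x)).
Proof.
  intros Hh Hf m M H. destruct (Hf m M H) as [L1 [H1 H1']].
  destruct (locally_lipschitz_bounded f m M Hf H) as [K [HK HK']].
  destruct (Hh (- K) K ltac:(lra)) as [L2 [H2 H2']].
  exists (L2 * L1). split; [nra|]. intros x y Hx Hy.
  assert (Hfx := HK' x Hx). assert (Hfy := HK' y Hy). apply Rabs_le_between in Hfx, Hfy.
  eapply Rle_trans; [apply (H2' _ _ Hfx Hfy)|]. specialize (H1' x y Hx Hy).
  rewrite Rmult_assoc. apply Rmult_le_compat_l; lra.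
Qed.

Lemma locally_lipschitz_tanh f : locally_lipschitz f -> locally_lipschitz (fun x => tanh (f x)).
Proof.
  intro H. apply (locally_lipschitz_comp tanh f); auto.
  intros m M _. exists 1. split; [lra|]. intros; rewrite Rmult_1_l; apply tanh_lipschitz.
Qed.

Lemma locally_lipschitz_minus f g :
  locally_lipschitz f -> locally_lipschitz g -> locally_lipschitz (fun x => f x - g x).
Proof.
  intros Hf Hg. apply (locally_lipschitz_plus f (fun x => - g x)); auto.
  intros m M H. destruct (Hg m M H) as [L [HL P]]. exists L. split; auto.
  intros x y Hx Hy. replace (- g x - - g y) with (- (g x - g y)) by ring.
  rewrite Rabs_Ropp. auto.
Qed.

Lemma locally_lipschitz_pow2 f : locally_lipschitz f -> locally_lipschitz (fun x => f x ^ 2).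
Proof.
  intros H m M Hm. destruct (locally_lipschitz_mult f f H H m M Hm) as [L [HL P]].
  exists L; split; auto. intros x y Hx Hy. simpl; rewrite !Rmult_1_r. auto.
Qed.

Ltac solve_locally_lipschitz :=
  lazymatch goal with
  | |- locally_lipschitz (fun w => w) => apply locally_lipschitz_id
  | |- locally_lipschitz (fun w => @?f w + @?g w) =>
      apply (locally_lipschitz_plus f g); solve_locally_lipschitz
  | |- locally_lipschitz (fun w => @?f w - @?g w) =>
      apply (locally_lipschitz_minus f g); solve_locally_lipschitz
  | |- locally_lipschitz (fun w => @?f w * @?g w) =>
      apply (locally_lipschitz_mult f g); solve_locally_lipschitz
  | |- locally_lipschitz (fun w => tanh (@?f w)) =>
      apply (locally_lipschitz_tanh f); solve_locally_lipschitz
  | |- locally_lipschitz (fun w => (@?f w) ^ 2) =>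
      apply (locally_lipschitz_pow2 f); solve_locally_lipschitz
  | |- locally_lipschitz (fun w => ?c) => apply locally_lipschitz_const
  end.

(** * Riemann integrability of compositions *)

Lemma pos_Rl_map (g : R -> R) (l : list R) (i : nat) :
  (i < length l)%nat -> RList.pos_Rl (List.map g l) i = g (RList.pos_Rl l i).
Proof.
  revert i; induction l as [|x l IH]; intros i Hi; simpl in *; [inversion Hi|].
  destruct i; [reflexivity|]. apply IH. simpl in Hi. apply PeanoNat.Nat.succ_lt_mono. exact Hi.
Qed.

Definition comp_IsStepFun (g : R -> R) (a b : R) (phi : StepFun a b) :
  IsStepFun (fun t => g (phi t)) a b.
Proof.
  destruct phi as [f [l [lf [H1 [H2 [H3 [H4 H5]]]]]]]. simpl.
  exists l, (List.map g lf).
  split; [exact H1|]. split; [exact H2|]. split; [exact H3|].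
  split; [rewrite List.length_map; exact H4|].
  intros i Hi x Hx. rewrite (H5 i Hi x Hx), pos_Rl_map; [reflexivity|].
  rewrite H4 in Hi. simpl in Hi. exact Hi.
Defined.

(* Compose the step-function approximations of Q with g, after clamping them into [m, M]. *)
Lemma Riemann_integrable_comp_lipschitz (g Q : R -> R) (a b m M L : R) :
  m <= M -> 0 <= L ->
  (forall t, Rmin a b <= t <= Rmax a b -> m <= Q t <= M) ->
  (forall x y, m <= x <= M -> m <= y <= M -> Rabs (g x - g y) <= L * Rabs (x - y)) ->
  Riemann_integrable Q a b -> Riemann_integrable (fun t => g (Q t)) a b.
Proof.
  intros HmM HL HQ Hg HI eps.
  set (cl := fun x => Rmax m (Rmin M x)).
  assert (Hcl : forall x, m <= cl x <= M).
  { intro x; unfold cl, Rmax, Rmin; repeat destruct Rle_dec; lra. }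
  assert (Hcl1 : forall x y, Rabs (cl x - cl y) <= Rabs (x - y)).
  { intros x y; unfold cl, Rmax, Rmin; repeat destruct Rle_dec;
    unfold Rabs; repeat destruct Rcase_abs; lra. }
  assert (Hclid : forall x, m <= x <= M -> cl x = x).
  { intros x Hx; unfold cl, Rmax, Rmin; repeat destruct Rle_dec; lra. }
  assert (He : 0 < eps / (L + 1)) by (apply Rdiv_lt_0_compat; [apply cond_pos|lra]).
  destruct (HI (mkposreal _ He)) as [phi [psi [Hp1 Hp2]]].
  exists (mkStepFun (comp_IsStepFun (fun x => g (cl x)) a b phi)).
  exists (mkStepFun (StepFun_P28 (L + 1) (mkStepFun (StepFun_P4 a b 0)) psi)).
  split.
  - intros t Ht. simpl. unfold fct_cte.
    specialize (Hp1 t Ht). specialize (HQ t Ht).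
    rewrite <- (Hclid (Q t) HQ) at 1.
    eapply Rle_trans; [apply Hg; apply Hcl|].
    eapply Rle_trans; [apply Rmult_le_compat_l; [exact HL|apply Hcl1]|].
    assert (0 <= Rabs (Q t - phi t)) by apply Rabs_pos.
    assert (L * Rabs (Q t - phi t) <= L * psi t) by (apply Rmult_le_compat_l; lra).
    nra.
  - rewrite StepFun_P30, StepFun_P18. simpl in Hp2.
    rewrite Rmult_0_l, Rplus_0_l, Rabs_mult, (Rabs_right (L + 1)) by lra.
    apply Rmult_lt_reg_r with (/ (L + 1)); [apply Rinv_0_lt_compat; lra|].
    replace ((L + 1) * Rabs (RiemannInt_SF psi) * / (L + 1)) with (Rabs (RiemannInt_SF psi))
      by (field; lra).
    exact Hp2.
Qed.

(** * Improper Riemann integrals over (0,1) *)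

Definition is_improper01 (h : R -> R) (l : R) : Prop :=
  (forall a b, 0 < a -> a <= b -> b < 1 -> ex_RInt h a b) /\
  (forall eps, 0 < eps -> exists delta, 0 < delta <= 1/2 /\
     forall a b, 0 < a < delta -> 1 - delta < b < 1 -> Rabs (RInt h a b - l) < eps).

Lemma improper01_iff h l : improper01 h l <-> is_improper01 h l.
Proof.
  split; intros [H1 H2]; split.
  - intros a b Ha Hab Hb. destruct (H1 a b Ha Hab Hb) as [pr]. apply ex_RInt_Reals_1. exact pr.
  - intros eps He. destruct (H2 eps He) as [d [Hd P]]. exists (Rmin d (1/2)).
    pose proof (Rmin_l d (1/2)). pose proof (Rmin_r d (1/2)).
    split; [split; [apply Rmin_glb_lt; lra|lra]|].
    intros a b Ha Hb. destruct (H1 a b ltac:(lra) ltac:(lra) ltac:(lra)) as [pr].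
    rewrite (RInt_Reals h a b pr). apply P; lra.
  - intros a b Ha Hab Hb. constructor. apply ex_RInt_Reals_0. apply H1; auto.
  - intros eps He. destruct (H2 eps He) as [d [Hd P]]. exists d. split; [lra|].
    intros a b Ha Hb pr. rewrite <- RInt_Reals. apply P; auto.
Qed.

Lemma is_improper01_le h1 h2 l1 l2 : is_improper01 h1 l1 -> is_improper01 h2 l2 ->
  (forall u, 0 < u < 1 -> h1 u <= h2 u) -> l1 <= l2.
Proof.
  intros [I1 H1] [I2 H2] Hle. destruct (Rle_dec l1 l2) as [|N]; auto. exfalso.
  set (e := (l1 - l2) / 3). assert (0 < e) by (unfold e; lra).
  destruct (H1 e H) as [d1 [Hd1 P1]]. destruct (H2 e H) as [d2 [Hd2 P2]].
  set (d := Rmin d1 d2). pose proof (Rmin_l d1 d2). pose proof (Rmin_r d1 d2).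
  assert (0 < d) by (apply Rmin_glb_lt; lra). fold d in H0, H3.
  specialize (P1 (d/2) (1 - d/2) ltac:(lra) ltac:(lra)).
  specialize (P2 (d/2) (1 - d/2) ltac:(lra) ltac:(lra)).
  assert (RInt h1 (d/2) (1 - d/2) <= RInt h2 (d/2) (1 - d/2)).
  { apply RInt_le; [lra|apply I1; lra|apply I2; lra|]. intros x Hx. apply Hle. lra. }
  apply Rabs_def2 in P1, P2. unfold e in *. lra.
Qed.

Lemma is_improper01_unique h l1 l2 : is_improper01 h l1 -> is_improper01 h l2 -> l1 = l2.
Proof.
  intros H1 H2. apply Rle_antisym; eapply is_improper01_le; eauto; intros; lra.
Qed.

Lemma is_improper01_ext h1 h2 l :
  (forall u, 0 < u < 1 -> h1 u = h2 u) -> is_improper01 h1 l -> is_improper01 h2 l.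
Proof.
  intros He [H1 H2].
  assert (E : forall a b, 0 < a -> a <= b -> b < 1 -> forall x, Rmin a b < x < Rmax a b -> h1 x = h2 x).
  { intros a b Ha Hab Hb x Hx. rewrite Rmin_left, Rmax_right in Hx by lra. apply He; lra. }
  split.
  - intros a b Ha Hab Hb. apply (ex_RInt_ext h1); [apply E|apply H1]; auto.
  - intros eps Heps. destruct (H2 eps Heps) as [d [Hd P]]. exists d. split; auto.
    intros a b Ha Hb. rewrite <- (RInt_ext h1); [apply P; auto|apply E; lra].
Qed.

Lemma is_improper01_const c : is_improper01 (fun _ => c) c.
Proof.
  split; [intros; apply ex_RInt_const|].
  intros eps He. set (d := Rmin (1/2) (eps / (2 * (Rabs c + 1)))).
  assert (Hc : 0 < Rabs c + 1) by (pose proof (Rabs_pos c); lra).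
  assert (Hp : 0 < eps / (2 * (Rabs c + 1))) by (apply Rdiv_lt_0_compat; lra).
  pose proof (Rmin_l (1/2) (eps / (2 * (Rabs c + 1)))) as M1.
  pose proof (Rmin_r (1/2) (eps / (2 * (Rabs c + 1)))) as M2. fold d in M1, M2.
  exists d. split; [split; [apply Rmin_glb_lt; lra|lra]|].
  intros a b Ha Hb. rewrite RInt_const.
  change (scal (b - a) c) with ((b - a) * c).
  replace ((b - a) * c - c) with (- ((1 - b + a) * c)) by ring.
  rewrite Rabs_Ropp, Rabs_mult, Rabs_right by lra.
  assert (2 * d * (Rabs c + 1) <= eps).
  { apply Rle_trans with (2 * (eps / (2 * (Rabs c + 1))) * (Rabs c + 1)).
    - apply Rmult_le_compat_r; lra.
    - right. field. lra. }
  pose proof (Rabs_pos c).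
  assert ((1 - b + a) * Rabs c <= 2 * d * Rabs c) by (apply Rmult_le_compat_r; lra).
  nra.
Qed.

Lemma is_improper01_plus_scal h1 h2 l1 l2 c : is_improper01 h1 l1 -> is_improper01 h2 l2 ->
  is_improper01 (fun u => h1 u + c * h2 u) (l1 + c * l2).
Proof.
  intros [I1 H1] [I2 H2]. split.
  - intros a b Ha Hab Hb. apply (ex_RInt_plus h1). apply I1; auto.
    apply (ex_RInt_scal h2). apply I2; auto.
  - intros eps He.
    assert (Hc : 0 < Rabs c + 1) by (pose proof (Rabs_pos c); lra).
    destruct (H1 (eps/2) ltac:(lra)) as [d1 [Hd1 P1]].
    destruct (H2 (eps/2/(Rabs c + 1)) ltac:(apply Rdiv_lt_0_compat; lra)) as [d2 [Hd2 P2]].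
    pose proof (Rmin_l d1 d2). pose proof (Rmin_r d1 d2).
    exists (Rmin d1 d2). split; [split; [apply Rmin_glb_lt|]; lra|].
    intros a b Ha Hb.
    rewrite (RInt_plus h1), (RInt_scal h2);
      [|apply I2; lra|apply I1; lra|apply (ex_RInt_scal h2); apply I2; lra].
    specialize (P1 a b ltac:(lra) ltac:(lra)). specialize (P2 a b ltac:(lra) ltac:(lra)).
    change (plus (RInt h1 a b) (scal c (RInt h2 a b))) with (RInt h1 a b + c * RInt h2 a b).
    replace (RInt h1 a b + c * RInt h2 a b - (l1 + c * l2)) with
      ((RInt h1 a b - l1) + c * (RInt h2 a b - l2)) by ring.
    eapply Rle_lt_trans; [apply Rabs_triang|]. rewrite Rabs_mult.
    assert (Rabs c * Rabs (RInt h2 a b - l2) <= (Rabs c + 1) * (eps / 2 / (Rabs c + 1)))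
      by (apply Rmult_le_compat; try apply Rabs_pos; lra).
    replace ((Rabs c + 1) * (eps / 2 / (Rabs c + 1))) with (eps/2) in H3 by (field; lra).
    lra.
Qed.

Lemma Rabs_RInt_le_dominated h k a b : a <= b -> ex_RInt h a b -> ex_RInt k a b ->
  (forall u, a < u < b -> Rabs (h u) <= k u) -> Rabs (RInt h a b) <= RInt k a b.
Proof.
  intros Hab Hh Hk Hd.
  assert (RInt h a b <= RInt k a b).
  { apply RInt_le; [exact Hab|exact Hh|exact Hk|].
    intros x Hx. specialize (Hd x Hx). apply Rabs_le_between in Hd. lra. }
  assert (RInt (fun x => -1 * k x) a b <= RInt h a b).
  { apply RInt_le; [exact Hab|apply (ex_RInt_scal k); exact Hk|exact Hh|].
    intros x Hx. specialize (Hd x Hx). apply Rabs_le_between in Hd. lra. }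
  rewrite (RInt_scal k) in H0 by exact Hk. change (scal (-1) (RInt k a b)) with (-1 * RInt k a b) in H0.
  apply Rabs_le. lra.
Qed.

Section Dominated.

Variables h k : R -> R.
Variable K : R.
Hypothesis h_int : forall a b, 0 < a -> a <= b -> b < 1 -> ex_RInt h a b.
Hypothesis k_improper : is_improper01 k K.
Hypothesis h_dominated : forall u, 0 < u < 1 -> Rabs (h u) <= k u.

Lemma RInt_dominated_nested lo a b hi :
  0 < lo -> lo <= a -> a <= b -> b <= hi -> hi < 1 ->
  Rabs (RInt h a b - RInt h lo hi) <= RInt k lo hi - RInt k a b.
Proof.
  destruct k_improper as [Hk _]. intros H1 H2 H3 H4 H5.
  rewrite <- (RInt_Chasles h lo a hi), <- (RInt_Chasles h a b hi) by (apply h_int; lra).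
  rewrite <- (RInt_Chasles k lo a hi), <- (RInt_Chasles k a b hi) by (apply Hk; lra).
  assert (E1 := Rabs_RInt_le_dominated h k lo a ltac:(lra) ltac:(apply h_int; lra)
                  ltac:(apply Hk; lra) ltac:(intros; apply h_dominated; lra)).
  assert (E2 := Rabs_RInt_le_dominated h k b hi ltac:(lra) ltac:(apply h_int; lra)
                  ltac:(apply Hk; lra) ltac:(intros; apply h_dominated; lra)).
  unfold plus; simpl.
  replace (RInt h a b - (RInt h lo a + (RInt h a b + RInt h b hi))) with
    (- (RInt h lo a + RInt h b hi)) by ring.
  rewrite Rabs_Ropp. eapply Rle_trans; [apply Rabs_triang|]. lra.
Qed.

Lemma RInt_dominated_cauchy eps : 0 < eps -> exists delta, 0 < delta <= 1/2 /\
  forall a b a' b', 0 < a < delta -> 1 - delta < b < 1 -> 0 < a' < delta -> 1 - delta < b' < 1 ->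
    Rabs (RInt h a b - RInt h a' b') < eps.
Proof.
  intros He. destruct (proj2 k_improper (eps/4) ltac:(lra)) as [d [Hd0 P]].
  exists d. split; auto. intros a b a' b' Ha Hb Ha' Hb'.
  set (lo := Rmin a a'). set (hi := Rmax b b').
  pose proof (Rmin_l a a'). pose proof (Rmin_r a a'). pose proof (Rmax_l b b'). pose proof (Rmax_r b b').
  assert (0 < lo < d) by (unfold lo, Rmin; destruct Rle_dec; lra).
  assert (1 - d < hi < 1) by (unfold hi, Rmax; destruct Rle_dec; lra).
  assert (N1 := RInt_dominated_nested lo a b hi ltac:(lra) H ltac:(lra) H1 ltac:(lra)).
  assert (N2 := RInt_dominated_nested lo a' b' hi ltac:(lra) H0 ltac:(lra) H2 ltac:(lra)).
  pose proof (P lo hi H3 H4) as A1. pose proof (P a b Ha Hb) as A2. pose proof (P a' b' Ha' Hb') as A3.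
  apply Rabs_def2 in A1, A2, A3.
  replace (RInt h a b - RInt h a' b') with
    ((RInt h a b - RInt h lo hi) - (RInt h a' b' - RInt h lo hi)) by ring.
  unfold Rminus at 1. eapply Rle_lt_trans; [apply Rabs_triang|]. rewrite Rabs_Ropp. lra.
Qed.

(* The integrals over (1/(n+3), 1 - 1/(n+3)) form a Cauchy sequence. *)
Lemma is_improper01_dominated : exists l, is_improper01 h l.
Proof.
  set (s := fun n : nat => / (INR n + 3)).
  assert (Hs : forall n, 0 < s n <= 1/3).
  { intro n. unfold s. pose proof (pos_INR n). split; [apply Rinv_0_lt_compat; lra|].
    replace (1/3) with (/3) by field. apply Rinv_le_contravar; lra. }
  assert (Hsmall : forall d, 0 < d -> exists N, forall n, (n >= N)%nat -> s n < d).
  { intros d Hd0. destruct (archimed_cor1 d Hd0) as [N [HN HN0]]. exists N. intros n Hn.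
    unfold s. apply Rle_lt_trans with (/ INR N); auto. apply Rinv_le_contravar.
    - apply lt_0_INR; auto.
    - apply le_INR in Hn. lra. }
  set (u := fun n => RInt h (s n) (1 - s n)).
  assert (HC : Cauchy_crit u).
  { intros eps He. destruct (RInt_dominated_cauchy eps He) as [d [Hd0 P]].
    destruct (Hsmall d ltac:(lra)) as [N HN]. exists N. intros n m Hn Hm.
    specialize (HN n Hn) as A. specialize (HN m Hm) as B.
    pose proof (Hs n); pose proof (Hs m). apply P; lra. }
  destruct (R_complete u HC) as [l Hl]. exists l. split; [auto|].
  intros eps He. destruct (RInt_dominated_cauchy (eps/2) ltac:(lra)) as [d [Hd0 P]].
  exists d. split; auto. intros a b Ha Hb.
  destruct (Hsmall d ltac:(lra)) as [N1 HN1]. destruct (Hl (eps/2) ltac:(lra)) as [N2 HN2].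
  set (n := max N1 N2). specialize (HN1 n (PeanoNat.Nat.le_max_l _ _)).
  specialize (HN2 n (PeanoNat.Nat.le_max_r _ _)).
  unfold Rdist, u in HN2. pose proof (Hs n).
  specialize (P a b (s n) (1 - s n) Ha Hb ltac:(lra) ltac:(lra)).
  replace (RInt h a b - l) with
    ((RInt h a b - RInt h (s n) (1 - s n)) + (RInt h (s n) (1 - s n) - l)) by ring.
  eapply Rle_lt_trans; [apply Rabs_triang|]. lra.
Qed.

End Dominated.

Lemma is_improper01_right_tail k l e : is_improper01 k l -> 0 < e ->
  exists d, 0 < d <= 1/2 /\ forall c b, 1 - d < c -> c <= b -> b < 1 -> Rabs (RInt k c b) < 2 * e.
Proof.
  intros [Ik Hk] He. destruct (Hk e He) as [d [Hd P]]. exists d. split; auto.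
  intros c b Hc Hcb Hb.
  pose proof (P (d/2) b ltac:(lra) ltac:(lra)) as Pb. pose proof (P (d/2) c ltac:(lra) ltac:(lra)) as Pc.
  rewrite <- (RInt_Chasles k (d/2) c b) in Pb by (apply Ik; lra).
  change (plus (RInt k (d/2) c) (RInt k c b)) with (RInt k (d/2) c + RInt k c b) in Pb.
  apply Rabs_def2 in Pb, Pc. apply Rabs_def1; lra.
Qed.

(* The integrands whose [Expect] is well behaved when only E[W^2] < oo is known. *)
Definition admissible (g : R -> R) : Prop :=
  locally_lipschitz g /\ exists C, 0 <= C /\ forall w, 0 <= w -> Rabs (g w) <= C * (1 + w ^ 2).

Lemma admissible_of_bound g c0 c1 c2 : locally_lipschitz g -> 0 <= c0 -> 0 <= c1 -> 0 <= c2 ->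
  (forall w, 0 <= w -> Rabs (g w) <= c0 + c1 * w + c2 * w ^ 2) -> admissible g.
Proof.
  intros H H0 H1 H2 Hb. split; auto. exists (c0 + c1 + c2). split; [lra|].
  intros w Hw. eapply Rle_trans; [apply Hb; auto|].
  assert (w <= 1 + w ^ 2) by nra. assert (1 <= 1 + w ^ 2) by nra. nra.
Qed.

Lemma admissible_const c : admissible (fun _ => c).
Proof.
  apply (admissible_of_bound _ (Rabs c) 0 0); try lra.
  - apply locally_lipschitz_const.
  - apply Rabs_pos.
  - intros; lra.
Qed.

Lemma admissible_id : admissible (fun w => w).
Proof.
  apply (admissible_of_bound _ 0 1 0); try lra; [apply locally_lipschitz_id|].
  intros. rewrite Rabs_right; lra.
Qed.

Lemma admissible_sqr : admissible (fun w => w ^ 2).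
Proof.
  apply (admissible_of_bound _ 0 0 1); try lra; [solve_locally_lipschitz|].
  intros. rewrite Rabs_right; nra.
Qed.

Lemma admissible_bounded f : locally_lipschitz f -> (forall w, 0 <= w -> Rabs (f w) <= 1) ->
  admissible f.
Proof.
  intros Hf Hb. apply (admissible_of_bound _ 1 0 0); try lra; auto.
  intros w Hw. specialize (Hb w Hw). lra.
Qed.

Lemma admissible_plus f g : admissible f -> admissible g -> admissible (fun w => f w + g w).
Proof.
  intros [Hf [C1 [HC1 B1]]] [Hg [C2 [HC2 B2]]]. split; [apply locally_lipschitz_plus; auto|].
  exists (C1 + C2). split; [lra|]. intros w Hw.
  eapply Rle_trans; [apply Rabs_triang|]. specialize (B1 w Hw). specialize (B2 w Hw). lra.
Qed.

Lemma admissible_scal g c : admissible g -> admissible (fun w => c * g w).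
Proof.
  intros [Hg [C [HC B]]]. split.
  - apply locally_lipschitz_mult; auto. apply locally_lipschitz_const.
  - exists (Rabs c * C). split; [pose proof (Rabs_pos c); nra|]. intros w Hw.
    rewrite Rabs_mult, Rmult_assoc. apply Rmult_le_compat_l; [apply Rabs_pos|auto].
Qed.

Lemma admissible_minus f g : admissible f -> admissible g -> admissible (fun w => f w - g w).
Proof.
  intros Hf Hg. destruct (admissible_plus f (fun w => -1 * g w) Hf (admissible_scal g (-1) Hg))
    as [L [C [HC B]]].
  split; [apply locally_lipschitz_minus; [apply Hf|apply Hg]|].
  exists C. split; auto. intros w Hw. replace (f w - g w) with (f w + -1 * g w) by ring. auto.
Qed.

Lemma admissible_bounded_mul f g : locally_lipschitz f -> (forall w, 0 <= w -> Rabs (f w) <= 1) ->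
  admissible g -> admissible (fun w => f w * g w).
Proof.
  intros Hf Hb [Hg [C [HC B]]]. split; [apply locally_lipschitz_mult; auto|].
  exists C. split; auto. intros w Hw. rewrite Rabs_mult.
  specialize (Hb w Hw). specialize (B w Hw). pose proof (Rabs_pos (f w)). pose proof (Rabs_pos (g w)).
  nra.
Qed.

Lemma Rabs_sech2_le1 x : Rabs (1 - tanh x ^ 2) <= 1.
Proof. pose proof (sech2_bound x). apply Rabs_le; lra. Qed.

Lemma Rabs_tanh_sqr_le1 x : Rabs (tanh x ^ 2) <= 1.
Proof. pose proof (sech2_bound x). apply Rabs_le. pose proof (pow2_ge_0 (tanh x)). lra. Qed.

Ltac solve_le1 :=
  intros ? _; first [apply Rabs_tanh_le1 | apply Rabs_sech2_le1 | apply Rabs_tanh_sqr_le1].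

Ltac solve_admissible :=
  match goal with
  | |- admissible (fun w => w) => apply admissible_id
  | |- admissible (Rmult ?c) => apply (admissible_scal (fun w => w) c); apply admissible_id
  | |- admissible (fun w => w ^ 2) => apply admissible_sqr
  | |- admissible (fun w => tanh (@?f w)) =>
      apply admissible_bounded; [solve_locally_lipschitz|solve_le1]
  | |- admissible (fun w => tanh (@?f w) ^ 2) =>
      apply admissible_bounded; [solve_locally_lipschitz|solve_le1]
  | |- admissible (fun w => 1 - tanh (@?f w) ^ 2) =>
      apply admissible_bounded; [solve_locally_lipschitz|solve_le1]
  | |- admissible (fun w => @?f w + @?g w) => apply (admissible_plus f g); solve_admissible
  | |- admissible (fun w => @?f w - @?g w) => apply (admissible_minus f g); solve_admissible
  | |- admissible (fun w => @?f w * @?g w) =>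
      first [ apply (admissible_scal g (f 0)); solve_admissible
            | apply (admissible_bounded_mul f g);
                [solve_locally_lipschitz|solve_le1|solve_admissible] ]
  | |- admissible (fun w => @?f w) => apply (admissible_const (f 0))
  end.

(** * Expectations under a weight law with finite second moment *)

Definition weight_law (Q : R -> R) : Prop :=
  is_quantile Q /\ (exists m2, improper01 (fun u => Q u ^ 2) m2) /\
  (exists m1, 0 < m1 /\ improper01 (fun u => Q u) m1).

Section Expectation.

Variable Q : R -> R.
Hypothesis HQ : weight_law Q.

Lemma Q_nonneg u : 0 < u < 1 -> 0 <= Q u.
Proof. destruct HQ as [[H _] _]. apply H. Qed.

Lemma Q_le u v : 0 < u -> u <= v -> v < 1 -> Q u <= Q v.
Proof. destruct HQ as [[_ H] _]. apply H. Qed.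

(* A monotone Q is bounded on [a, b], where g is Lipschitz. *)
Lemma ex_RInt_comp_quantile g a b : locally_lipschitz g -> 0 < a -> a <= b -> b < 1 ->
  ex_RInt (fun u => g (Q u)) a b.
Proof.
  destruct HQ as [_ [_ [m1 [_ [HI _]]]]]. intros Hg Ha Hab Hb.
  destruct (HI a b Ha Hab Hb) as [pr]. assert (Hmono : Q a <= Q b) by (apply Q_le; lra).
  destruct (Hg (Q a) (Q b) Hmono) as [L [HL HL1]]. apply ex_RInt_Reals_1.
  apply (Riemann_integrable_comp_lipschitz g Q a b (Q a) (Q b) L Hmono HL); auto.
  intros t Ht. rewrite Rmin_left, Rmax_right in Ht by lra. split; apply Q_le; lra.
Qed.

Lemma is_improper01_second_moment : exists m2, is_improper01 (fun u => 1 + Q u ^ 2) (1 + m2).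
Proof.
  destruct HQ as [_ [[m2 H2] _]]. exists m2. apply improper01_iff in H2.
  apply (is_improper01_ext (fun u => 1 + 1 * Q u ^ 2)); [intros; ring|].
  replace (1 + m2) with (1 + 1 * m2) by ring. apply is_improper01_plus_scal; [apply is_improper01_const|exact H2].
Qed.

Lemma Expect_eq g l : is_improper01 (fun u => g (Q u)) l -> Expect Q g = l.
Proof.
  intros H. unfold Expect. apply (is_improper01_unique (fun u => g (Q u))); [|exact H].
  apply improper01_iff, epsilon_spec. exists l. apply improper01_iff. exact H.
Qed.

Lemma Expect_is_improper01 g : admissible g -> is_improper01 (fun u => g (Q u)) (Expect Q g).
Proof.
  intros [Hg [C [HC HgC]]]. destruct is_improper01_second_moment as [m2 Hk].
  destruct (is_improper01_dominated (fun u => g (Q u)) (fun u => C * (1 + Q u ^ 2)) (C * (1 + m2)))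
    as [l Hl].
  - intros a b Ha Hab Hb. apply ex_RInt_comp_quantile; auto.
  - apply (is_improper01_ext (fun u => 0 + C * (1 + Q u ^ 2))); [intros; ring|].
    rewrite <- (Rplus_0_l (C * (1 + m2))).
    apply is_improper01_plus_scal; [apply is_improper01_const|exact Hk].
  - intros u Hu. apply HgC, Q_nonneg, Hu.
  - rewrite (Expect_eq g l Hl). exact Hl.
Qed.

Lemma Expect_plus_scal g1 g2 c : admissible g1 -> admissible g2 ->
  Expect Q (fun w => g1 w + c * g2 w) = Expect Q g1 + c * Expect Q g2.
Proof.
  intros H1 H2. apply Expect_eq.
  apply (is_improper01_plus_scal (fun u => g1 (Q u)) (fun u => g2 (Q u)));
    apply Expect_is_improper01; auto.
Qed.

Lemma Expect_const c : Expect Q (fun _ => c) = c.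
Proof. apply Expect_eq, is_improper01_const. Qed.

Lemma Expect_ext g1 g2 : admissible g1 ->
  (forall w, 0 <= w -> g1 w = g2 w) -> Expect Q g1 = Expect Q g2.
Proof.
  intros H1 He. symmetry. apply Expect_eq.
  apply (is_improper01_ext (fun u => g1 (Q u))); [intros u Hu; apply He, Q_nonneg, Hu|].
  apply Expect_is_improper01, H1.
Qed.

Lemma Expect_add g1 g2 : admissible g1 -> admissible g2 ->
  Expect Q (fun w => g1 w + g2 w) = Expect Q g1 + Expect Q g2.
Proof.
  intros H1 H2.
  rewrite (Expect_ext (fun w => g1 w + g2 w) (fun w => g1 w + 1 * g2 w));
    [|apply admissible_plus; auto|intros; ring].
  rewrite Expect_plus_scal by auto. ring.
Qed.

Lemma Expect_scal g c : admissible g -> Expect Q (fun w => c * g w) = c * Expect Q g.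
Proof.
  intros Hg.
  rewrite (Expect_ext (fun w => c * g w) (fun w => 0 + c * g w));
    [|apply admissible_scal; auto|intros; ring].
  rewrite Expect_plus_scal, Expect_const by (auto; apply admissible_const). ring.
Qed.

Lemma Expect_sub g1 g2 : admissible g1 -> admissible g2 ->
  Expect Q (fun w => g1 w - g2 w) = Expect Q g1 - Expect Q g2.
Proof.
  intros H1 H2.
  rewrite (Expect_ext (fun w => g1 w - g2 w) (fun w => g1 w + -1 * g2 w));
    [|apply admissible_minus; auto|intros; ring].
  rewrite Expect_plus_scal by auto. ring.
Qed.

Lemma Expect_le g1 g2 : admissible g1 -> admissible g2 ->
  (forall w, 0 <= w -> g1 w <= g2 w) -> Expect Q g1 <= Expect Q g2.
Proof.
  intros H1 H2 Hle. apply (is_improper01_le (fun u => g1 (Q u)) (fun u => g2 (Q u)));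
    try apply Expect_is_improper01; auto.
  intros u Hu. apply Hle, Q_nonneg, Hu.
Qed.

Lemma Rabs_Expect_le g h : admissible g -> admissible h ->
  (forall w, 0 <= w -> Rabs (g w) <= h w) -> Rabs (Expect Q g) <= Expect Q h.
Proof.
  intros Hg Hh Hd. apply Rabs_le. split.
  - rewrite <- (Rmult_1_l (Expect Q h)), Ropp_mult_distr_l, <- Expect_scal by auto.
    apply Expect_le; auto; [apply admissible_scal, Hh|].
    intros w Hw. specialize (Hd w Hw). apply Rabs_le_between in Hd. lra.
  - apply Expect_le; auto. intros w Hw. specialize (Hd w Hw). apply Rabs_le_between in Hd. lra.
Qed.

Lemma Rabs_Expect_le_EW g c : admissible g ->
  (forall w, 0 <= w -> Rabs (g w) <= c * w) -> Rabs (Expect Q g) <= c * EW Q.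
Proof.
  intros Hg Hb. unfold EW. rewrite <- Expect_scal by solve_admissible.
  apply Rabs_Expect_le; auto; solve_admissible.
Qed.

Lemma Rabs_Expect_le_EW2 g c : admissible g ->
  (forall w, 0 <= w -> Rabs (g w) <= c * w ^ 2) -> Rabs (Expect Q g) <= c * EW2 Q.
Proof.
  intros Hg Hb. unfold EW2. rewrite <- Expect_scal by solve_admissible.
  apply Rabs_Expect_le; auto; solve_admissible.
Qed.

Lemma EW_pos : 0 < EW Q.
Proof.
  destruct HQ as [_ [_ [m1 [Hm1 HI]]]]. unfold EW. rewrite (Expect_eq (fun w => w) m1); auto.
  apply improper01_iff, HI.
Qed.

Lemma EW_sqr_le_EW2 : EW Q ^ 2 <= EW2 Q.
Proof.
  set (t := EW Q).
  assert (H : 0 <= Expect Q (fun w => (w ^ 2 - 2 * t * w) + t ^ 2)).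
  { rewrite <- (Expect_const 0). apply Expect_le; [solve_admissible|solve_admissible|].
    intros w _. pose proof (pow2_ge_0 (w - t)). nra. }
  rewrite Expect_add, Expect_sub, Expect_scal, Expect_const in H by solve_admissible.
  unfold EW2. fold t. unfold EW in t. fold t in H. nra.
Qed.

Lemma EW2_pos : 0 < EW2 Q.
Proof. pose proof EW_sqr_le_EW2. pose proof EW_pos. nra. Qed.

(* Split (0,1) at c, with K = Q c: below c the integrand is at most eta, above c the
   weight 1 + Q^2 has small integral. *)
Lemma Expect_tail_bound C eta : 0 <= C -> 0 < eta -> exists K, 0 <= K /\
  forall g, locally_lipschitz g -> (forall w, 0 <= w -> Rabs (g w) <= C * (1 + w ^ 2)) ->
  (forall w, 0 <= w <= K -> Rabs (g w) <= eta) -> Rabs (Expect Q g) <= 3 * eta.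
Proof.
  intros HC Heta. destruct is_improper01_second_moment as [m2 Hk].
  set (e := eta / (2 * (C + 1))). assert (He : 0 < e) by (unfold e; apply Rdiv_lt_0_compat; lra).
  destruct (is_improper01_right_tail _ _ e Hk He) as [d0 [Hd0 P0]].
  set (c := 1 - d0 / 2). exists (Q c). split; [apply Q_nonneg; unfold c; lra|].
  intros g Hg Hbd Hsm.
  assert (HG : admissible g) by (split; auto; exists C; auto).
  destruct (proj2 (Expect_is_improper01 g HG) eta Heta) as [d1 [Hd1 P1]].
  set (a := Rmin d0 d1 / 4). set (b := 1 - Rmin d0 d1 / 4).
  pose proof (Rmin_l d0 d1). pose proof (Rmin_r d0 d1).
  assert (0 < Rmin d0 d1) by (apply Rmin_glb_lt; lra).
  specialize (P1 a b ltac:(unfold a; lra) ltac:(unfold b; lra)).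
  assert (Hint : forall x y, 0 < x -> x <= y -> y < 1 -> ex_RInt (fun u => g (Q u)) x y)
    by (intros; apply ex_RInt_comp_quantile; auto).
  assert (Hintk : forall x y, 0 < x -> x <= y -> y < 1 -> ex_RInt (fun u => C * (1 + Q u ^ 2)) x y)
    by (intros; apply (ex_RInt_comp_quantile (fun w => C * (1 + w ^ 2))); auto; solve_locally_lipschitz).
  rewrite <- (RInt_Chasles _ a c b) in P1 by (apply Hint; unfold a, b, c in *; lra).
  change (plus ?x ?y) with (x + y) in P1.
  assert (E1 : Rabs (RInt (fun u => g (Q u)) a c) <= (c - a) * eta).
  { apply abs_RInt_le_const; [unfold a, c in *; lra|apply Hint; unfold a, c in *; lra|].
    intros u Hu. apply Hsm. split; [apply Q_nonneg|apply Q_le]; unfold a, c in *; lra. }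
  assert (E2 : Rabs (RInt (fun u => g (Q u)) c b) <= RInt (fun u => C * (1 + Q u ^ 2)) c b).
  { apply Rabs_RInt_le_dominated; [unfold b, c in *; lra|apply Hint|apply Hintk|];
      try (unfold b, c in *; lra).
    intros u Hu. apply Hbd, Q_nonneg. unfold a, b, c in *; lra. }
  assert (E3 : RInt (fun u => C * (1 + Q u ^ 2)) c b <= eta).
  { rewrite (RInt_scal (fun u => 1 + Q u ^ 2))
      by (apply (ex_RInt_comp_quantile (fun w => 1 + w ^ 2)); unfold b, c in *; try lra;
          solve_locally_lipschitz).
    change (scal C ?x) with (C * x).
    specialize (P0 c b ltac:(unfold c; lra) ltac:(unfold b, c in *; lra) ltac:(unfold b; lra)).
    apply Rle_trans with ((C + 1) * (2 * e)).
    - apply Rabs_def2 in P0. nra.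
    - right. unfold e. field. lra. }
  assert ((c - a) * eta <= eta) by (unfold a, c in *; nra).
  apply Rabs_def2 in P1.
  pose proof (Rabs_triang (RInt (fun u => g (Q u)) a c) (RInt (fun u => g (Q u)) c b)).
  apply Rabs_le. apply Rabs_le_between in E1. apply Rabs_le_between in E2. lra.
Qed.

End Expectation.

(** * The mean-field map and its first-order expansion *)

Lemma Rabs_affine_perturbation_le a w dz h L : 0 <= a -> 0 <= w -> 0 <= L ->
  Rabs dz <= L * Rabs h -> Rabs (a * w * dz + h) <= (a * w * L + 1) * Rabs h.
Proof.
  intros. eapply Rle_trans; [apply Rabs_triang|]. rewrite Rabs_mult, (Rabs_right (a * w)) by nra.
  assert (a * w * Rabs dz <= a * w * (L * Rabs h)) by (apply Rmult_le_compat_l; nra). nra.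
Qed.

Lemma tanh_remainder_quotient_bounds x a w dz h L K : 0 <= a -> 0 <= w -> 0 <= L -> h <> 0 ->
  Rabs dz <= L * Rabs h ->
  let q := / Rabs h *
    Rabs (tanh (x + (a * w * dz + h)) - tanh x - (1 - tanh x ^ 2) * (a * w * dz + h)) in
  q * (a * w) <= (2 * a ^ 2 * L + 2 * a) * (1 + w ^ 2) /\
  (w <= K -> q * (a * w) <= 2 * (a * K * L + 1) ^ 2 * (a * K) * Rabs h).
Proof.
  intros Ha Hw HL Hh Hdz q.
  assert (Hh0 : 0 < Rabs h) by (apply Rabs_pos_lt; auto).
  pose proof (Rabs_affine_perturbation_le a w dz h L Ha Hw HL Hdz) as HD.
  set (D := a * w * dz + h) in *.
  assert (Hq0 : 0 <= q)
    by (apply Rmult_le_pos; [apply Rlt_le, Rinv_0_lt_compat; auto|apply Rabs_pos]).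
  assert (HawL : 0 <= a * w * L) by (apply Rmult_le_pos; [nra|lra]).
  split.
  - assert (q <= 2 * (a * w * L + 1)).
    { unfold q. apply Rmult_le_reg_l with (Rabs h); auto.
      rewrite <- Rmult_assoc, Rinv_r, Rmult_1_l by lra.
      eapply Rle_trans; [apply tanh_taylor1|]. lra. }
    apply Rle_trans with (2 * (a * w * L + 1) * (a * w)); [apply Rmult_le_compat_r; nra|].
    assert (w <= 1 + w ^ 2) by nra. assert (0 <= a ^ 2 * L) by nra.
    replace (2 * (a * w * L + 1) * (a * w)) with (2 * (a ^ 2 * L) * w ^ 2 + 2 * a * w) by ring.
    nra.
  - intros HwK.
    assert (HK : a * w * L + 1 <= a * K * L + 1)
      by (apply Rplus_le_compat_r, Rmult_le_compat_r; nra).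
    assert (q <= 2 * (a * K * L + 1) ^ 2 * Rabs h).
    { unfold q. apply Rmult_le_reg_l with (Rabs h); auto.
      rewrite <- Rmult_assoc, Rinv_r, Rmult_1_l by lra.
      eapply Rle_trans; [apply tanh_taylor2|].
      rewrite <- (pow2_abs D). pose proof (Rabs_pos D). pose proof (Rabs_pos h).
      replace (Rabs h * (2 * (a * K * L + 1) ^ 2 * Rabs h))
        with (2 * ((a * K * L + 1) * Rabs h) ^ 2) by ring.
      apply Rmult_le_compat_l; [lra|]. apply pow_incr. split; [lra|].
      eapply Rle_trans; [exact HD|]. apply Rmult_le_compat_r; lra. }
    apply Rle_trans with (2 * (a * K * L + 1) ^ 2 * Rabs h * (a * K));
      [apply Rmult_le_compat; nra|].
    right; ring.
Qed.

Lemma chi_formula_perturbation t s p s0 S e1 e2 e3 : 0 <= s <= s0 -> 0 <= p <= S -> S < 1 ->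
  Rabs (t - 1) <= e1 -> Rabs (s - s0) <= e2 -> Rabs (p - S) <= e3 ->
  Rabs (t + s ^ 2 / (1 - p) - (1 + s0 ^ 2 / (1 - S)))
  <= e1 + 2 * s0 * e2 / (1 - S) + s0 ^ 2 * e3 / (1 - S) ^ 2.
Proof.
  intros Hs Hp HS H1 H2 H3.
  replace (t + s ^ 2 / (1 - p) - (1 + s0 ^ 2 / (1 - S))) with
    ((t - 1) + ((s - s0) * (s + s0) * (1 - S) + s0 ^ 2 * (p - S)) / ((1 - p) * (1 - S)))
    by (field; lra).
  eapply Rle_trans; [apply Rabs_triang|]. rewrite Rplus_assoc. apply Rplus_le_compat; [exact H1|].
  assert (N : Rabs ((s - s0) * (s + s0) * (1 - S) + s0 ^ 2 * (p - S))
              <= e2 * (2 * s0) * (1 - S) + s0 ^ 2 * e3).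
  { eapply Rle_trans; [apply Rabs_triang|].
    rewrite !Rabs_mult, (Rabs_right (s + s0)), (Rabs_right (1 - S)), (Rabs_right (s0 ^ 2)) by nra.
    pose proof (Rabs_pos (s - s0)). pose proof (Rabs_pos (p - S)).
    assert (Rabs (s - s0) * (s + s0) <= e2 * (2 * s0)) by (apply Rmult_le_compat; lra).
    assert (Rabs (s - s0) * (s + s0) * (1 - S) <= e2 * (2 * s0) * (1 - S))
      by (apply Rmult_le_compat_r; lra).
    assert (s0 ^ 2 * Rabs (p - S) <= s0 ^ 2 * e3) by (apply Rmult_le_compat_l; nra). lra. }
  unfold Rdiv. rewrite Rabs_mult, Rabs_inv, (Rabs_right ((1 - p) * (1 - S))) by nra.
  assert (/ ((1 - p) * (1 - S)) <= / ((1 - S) * (1 - S))) by (apply Rinv_le_contravar; nra).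
  assert (0 < / ((1 - S) * (1 - S))) by (apply Rinv_0_lt_compat; nra).
  pose proof (Rabs_pos ((s - s0) * (s + s0) * (1 - S) + s0 ^ 2 * (p - S))).
  eapply Rle_trans;
    [apply Rmult_le_compat; [lra|left; apply Rinv_0_lt_compat; nra|exact N|eassumption]|].
  right. field. lra.
Qed.

Lemma small_mul_lt c tgt : 0 <= c -> 0 < tgt -> exists d, 0 < d /\ forall B, 0 < B < d -> c * B < tgt.
Proof.
  intros Hc Ht. exists (tgt / (c + 1)). split; [apply Rdiv_lt_0_compat; lra|].
  intros B HB. apply Rle_lt_trans with ((c + 1) * B); [nra|].
  apply Rlt_le_trans with ((c + 1) * (tgt / (c + 1))); [apply Rmult_lt_compat_l; lra|].
  right; field; lra.
Qed.

Section MeanField.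

Variable Q : R -> R.
Hypothesis HQ : weight_law Q.
Variable a : R.
Hypothesis Ha : 0 < a.

Definition Fmap z B := Expect Q (fun w => tanh (a * w * z + B) * (a * w)).
Definition Mmap z B := Expect Q (fun w => tanh (a * w * z + B)).
Definition sech2_mean z B := Expect Q (fun w => 1 - tanh (a * w * z + B) ^ 2).
Definition sech2_mean_W z B := Expect Q (fun w => (1 - tanh (a * w * z + B) ^ 2) * (a * w)).
Definition sech2_mean_W2 z B :=
  Expect Q (fun w => (1 - tanh (a * w * z + B) ^ 2) * (a ^ 2 * w ^ 2)).

(* Implicit differentiation of M(z*(B), B), where z*(B) = F(z*(B), B). *)
Definition chi_of z B := sech2_mean z B + sech2_mean_W z B ^ 2 / (1 - sech2_mean_W2 z B).

Lemma Fmap_lipschitz_z z1 z2 B : Rabs (Fmap z1 B - Fmap z2 B) <= a ^ 2 * Rabs (z1 - z2) * EW2 Q.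
Proof.
  unfold Fmap. rewrite <- Expect_sub by (auto; solve_admissible).
  apply Rabs_Expect_le_EW2; [auto|solve_admissible|]. intros w Hw.
  rewrite <- Rmult_minus_distr_r, Rabs_mult.
  eapply Rle_trans; [apply Rmult_le_compat_r; [apply Rabs_pos|apply tanh_lipschitz]|].
  replace (a * w * z1 + B - (a * w * z2 + B)) with (a * w * (z1 - z2)) by ring.
  rewrite !Rabs_mult, (Rabs_right a), (Rabs_right w) by lra. right; ring.
Qed.

Lemma Fmap_lipschitz_B z B1 B2 : Rabs (Fmap z B1 - Fmap z B2) <= a * Rabs (B1 - B2) * EW Q.
Proof.
  unfold Fmap. rewrite <- Expect_sub by (auto; solve_admissible).
  apply Rabs_Expect_le_EW; [auto|solve_admissible|]. intros w Hw.
  rewrite <- Rmult_minus_distr_r, Rabs_mult.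
  eapply Rle_trans; [apply Rmult_le_compat_r; [apply Rabs_pos|apply tanh_lipschitz]|].
  replace (a * w * z + B1 - (a * w * z + B2)) with (B1 - B2) by ring.
  rewrite !Rabs_mult, (Rabs_right a), (Rabs_right w) by lra. right; ring.
Qed.

Lemma Fmap_0 B : Fmap 0 B = tanh B * (a * EW Q).
Proof.
  unfold Fmap, EW. rewrite <- (Expect_scal Q HQ (fun w => w) a) by (auto; solve_admissible).
  rewrite <- (Expect_scal Q HQ (fun w => a * w) (tanh B)) by (auto; solve_admissible).
  apply Expect_ext; auto; [solve_admissible|]. intros w _. rewrite Rmult_0_r, Rplus_0_l. reflexivity.
Qed.

Lemma Fmap_le z B : Fmap z B <= a * EW Q.
Proof.
  unfold Fmap, EW. rewrite <- (Expect_scal Q HQ (fun w => w) a) by (auto; solve_admissible).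
  apply Expect_le; auto; try solve_admissible. intros w Hw.
  pose proof (tanh_bound (a * w * z + B)). assert (0 <= a * w) by nra. nra.
Qed.

Lemma sech2_mean_W_bounds z B : 0 <= sech2_mean_W z B <= a * EW Q.
Proof.
  unfold sech2_mean_W, EW. split.
  - rewrite <- (Expect_const Q 0). apply Expect_le; auto; try solve_admissible.
    intros w Hw. pose proof (sech2_bound (a * w * z + B)). assert (0 <= a * w) by nra. nra.
  - rewrite <- Expect_scal by (auto; solve_admissible). apply Expect_le; auto; try solve_admissible.
    intros w Hw. pose proof (sech2_bound (a * w * z + B)). assert (0 <= a * w) by nra. nra.
Qed.

Lemma sech2_mean_W2_bounds z B : 0 <= sech2_mean_W2 z B <= a ^ 2 * EW2 Q.
Proof.
  unfold sech2_mean_W2, EW2. split.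
  - rewrite <- (Expect_const Q 0). apply Expect_le; auto; try solve_admissible.
    intros w _. pose proof (sech2_bound (a * w * z + B)). pose proof (pow2_ge_0 (a * w)). nra.
  - rewrite <- Expect_scal by (auto; solve_admissible). apply Expect_le; auto; try solve_admissible.
    intros w _. pose proof (sech2_bound (a * w * z + B)). pose proof (pow2_ge_0 (a * w)). nra.
Qed.

Lemma Mmap_expand z B z' B' :
  Rabs (Mmap z' B' - Mmap z B - (z' - z) * sech2_mean_W z B - (B' - B) * sech2_mean z B)
  <= 4 * (a ^ 2 * EW2 Q * (z' - z) ^ 2 + (B' - B) ^ 2).
Proof.
  unfold Mmap, sech2_mean_W, sech2_mean. set (dz := z' - z). set (h := B' - B).
  rewrite <- (Expect_scal Q HQ _ dz), <- (Expect_scal Q HQ _ h) by (auto; solve_admissible).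
  rewrite <- !Expect_sub by (auto; solve_admissible).
  replace (4 * (a ^ 2 * EW2 Q * dz ^ 2 + h ^ 2))
    with (Expect Q (fun w => (4 * a ^ 2 * dz ^ 2) * w ^ 2 + 4 * h ^ 2))
    by (rewrite Expect_add, Expect_scal, Expect_const by (auto; solve_admissible); unfold EW2; ring).
  apply Rabs_Expect_le; auto; try solve_admissible. intros w Hw.
  replace (a * w * z' + B') with ((a * w * z + B) + (a * w * dz + h)) by (unfold dz, h; ring).
  set (x := a * w * z + B). set (D := a * w * dz + h).
  replace (tanh (x + D) - tanh x - dz * ((1 - tanh x ^ 2) * (a * w)) - h * (1 - tanh x ^ 2))
    with (tanh (x + D) - tanh x - (1 - tanh x ^ 2) * D) by (unfold D; ring).
  eapply Rle_trans; [apply tanh_taylor2|]. unfold D.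
  pose proof (pow2_ge_0 (a * w * dz - h)). nra.
Qed.

(* The remainder, divided by |B' - B|, is O(1 + w^2) everywhere and O(|B' - B|) on [0, K];
   the tail bound then makes its expectation o(1). *)
Lemma Fmap_expand L : 0 <= L -> forall eta, 0 < eta -> exists delta, 0 < delta /\
  forall z B z' B', B' <> B -> Rabs (z' - z) <= L * Rabs (B' - B) -> Rabs (B' - B) < delta ->
  Rabs (Fmap z' B' - Fmap z B - (z' - z) * sech2_mean_W2 z B - (B' - B) * sech2_mean_W z B)
  <= 3 * eta * Rabs (B' - B).
Proof.
  intros HL eta Heta.
  set (C := 2 * a ^ 2 * L + 2 * a). assert (HC : 0 <= C) by (unfold C; nra).
  destruct (Expect_tail_bound Q HQ C eta HC Heta) as [K [HK Htail]].
  set (k := 2 * (a * K * L + 1) ^ 2 * (a * K)).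
  assert (Hk : 0 <= k) by (unfold k; apply Rmult_le_pos; [pose proof (pow2_ge_0 (a * K * L + 1)); lra|nra]).
  exists (eta / (k + 1)). split; [apply Rdiv_lt_0_compat; lra|].
  intros z B z' B' HB Hz Hh. apply Rminus_eq_contra in HB.
  set (dz := z' - z) in *. set (h := B' - B) in *.
  assert (Hh0 : 0 < Rabs h) by (apply Rabs_pos_lt; auto).
  set (x := fun w => a * w * z + B).
  set (rem := fun w => tanh (x w + (a * w * dz + h)) - tanh (x w) - (1 - tanh (x w) ^ 2) * (a * w * dz + h)).
  set (g := fun w => / Rabs h * (tanh (a * w * z' + B') * (a * w) - tanh (a * w * z + B) * (a * w)
     - (dz * ((1 - tanh (a * w * z + B) ^ 2) * (a ^ 2 * w ^ 2))
        + h * ((1 - tanh (a * w * z + B) ^ 2) * (a * w))))).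
  assert (Hg : admissible g) by (unfold g; solve_admissible).
  assert (Eg : Expect Q g = / Rabs h *
    (Fmap z' B' - Fmap z B - dz * sech2_mean_W2 z B - h * sech2_mean_W z B)).
  { unfold g, Fmap, sech2_mean_W2, sech2_mean_W.
    rewrite Expect_scal, Expect_sub, Expect_sub, Expect_add, Expect_scal, Expect_scal
      by (auto; solve_admissible).
    ring. }
  assert (Hrem : forall w, 0 <= w -> Rabs (g w) = / Rabs h * Rabs (rem w) * (a * w)).
  { intros w Hw. unfold g. rewrite Rabs_mult, Rabs_inv, Rabs_Rabsolu.
    match goal with |- _ * Rabs ?e = _ => replace e with (rem w * (a * w)) end.
    - rewrite Rabs_mult, (Rabs_right (a * w)) by nra. ring.
    - unfold rem, x; cbv beta.
      replace (a * w * z + B + (a * w * dz + h)) with (a * w * z' + B') by (unfold dz, h; ring).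
      ring. }
  assert (Hg1 : forall w, 0 <= w -> Rabs (g w) <= C * (1 + w ^ 2)).
  { intros w Hw. rewrite Hrem by auto.
    exact (proj1 (tanh_remainder_quotient_bounds (x w) a w dz h L K ltac:(lra) Hw HL HB Hz)). }
  assert (Hg2 : forall w, 0 <= w <= K -> Rabs (g w) <= eta).
  { intros w Hw. rewrite Hrem by lra.
    eapply Rle_trans;
      [exact (proj2 (tanh_remainder_quotient_bounds (x w) a w dz h L K ltac:(lra) ltac:(lra) HL HB Hz)
                    ltac:(lra))|].
    change (k * Rabs h <= eta). apply Rle_trans with ((k + 1) * (eta / (k + 1)));
      [apply Rmult_le_compat; [exact Hk|apply Rabs_pos|lra|lra]|].
    right. field. lra. }
  specialize (Htail g (proj1 Hg) Hg1 Hg2).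
  rewrite Eg, Rabs_mult, Rabs_inv, Rabs_Rabsolu in Htail.
  apply Rmult_le_reg_l with (/ Rabs h); [apply Rinv_0_lt_compat; auto|].
  replace (/ Rabs h * (3 * eta * Rabs h)) with (3 * eta) by (field; lra). exact Htail.
Qed.

Lemma sech2_mean_near_1_quadratic z B :
  Rabs (sech2_mean z B - 1) <= 2 * a ^ 2 * z ^ 2 * EW2 Q + 2 * B ^ 2.
Proof.
  unfold sech2_mean, EW2. rewrite <- (Expect_const Q 1) at 1.
  rewrite <- Expect_sub by (auto; solve_admissible).
  replace (2 * a ^ 2 * z ^ 2 * Expect Q (fun w => w ^ 2) + 2 * B ^ 2)
    with (Expect Q (fun w => (2 * a ^ 2 * z ^ 2) * w ^ 2 + 2 * B ^ 2))
    by (rewrite Expect_add, Expect_scal, Expect_const by (auto; solve_admissible); ring).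
  apply Rabs_Expect_le; auto; try solve_admissible. intros w Hw.
  replace (1 - tanh (a * w * z + B) ^ 2 - 1) with (- tanh (a * w * z + B) ^ 2) by ring.
  rewrite Rabs_Ropp, Rabs_right by (apply Rle_ge, pow2_ge_0).
  eapply Rle_trans; [apply tanh_sqr_le|]. pose proof (pow2_ge_0 (a * w * z - B)). nra.
Qed.

Lemma sech2_mean_near_1 L z B : 0 <= B <= 1 -> Rabs z <= L * B ->
  Rabs (sech2_mean z B - 1) <= (2 * a ^ 2 * L ^ 2 * EW2 Q + 2) * B.
Proof.
  intros HB Hz. eapply Rle_trans; [apply sech2_mean_near_1_quadratic|].
  pose proof (EW2_pos Q HQ).
  assert (z ^ 2 <= L ^ 2 * B).
  { rewrite <- (pow2_abs z). pose proof (Rabs_pos z).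
    apply Rle_trans with ((L * B) ^ 2); [apply pow_incr; lra|].
    assert (L ^ 2 * (B * B) <= L ^ 2 * B) by (apply Rmult_le_compat_l; nra). nra. }
  assert (2 * a ^ 2 * EW2 Q * z ^ 2 <= 2 * a ^ 2 * EW2 Q * (L ^ 2 * B))
    by (apply Rmult_le_compat_l; nra).
  nra.
Qed.

Lemma sech2_mean_W_near L z B : 0 <= B -> Rabs z <= L * B ->
  Rabs (sech2_mean_W z B - a * EW Q) <= (a ^ 2 * L * EW2 Q + a * EW Q) * B.
Proof.
  intros HB Hz. pose proof (EW_pos Q HQ). pose proof (EW2_pos Q HQ).
  apply Rle_trans with (a ^ 2 * Rabs z * EW2 Q + a * B * EW Q);
    [|assert (0 <= a ^ 2 * EW2 Q) by nra; nra].
  unfold sech2_mean_W, EW, EW2.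
  rewrite <- Expect_scal, <- Expect_sub by (auto; solve_admissible).
  rewrite <- (Expect_scal Q HQ (fun w => w ^ 2)), <- (Expect_scal Q HQ (fun w => w)),
    <- Expect_add by (auto; solve_admissible).
  apply Rabs_Expect_le; auto; try solve_admissible. intros w Hw.
  replace ((1 - tanh (a * w * z + B) ^ 2) * (a * w) - a * w)
    with (- (tanh (a * w * z + B) ^ 2 * (a * w))) by ring.
  assert (Haw : 0 <= a * w) by nra.
  rewrite Rabs_Ropp, Rabs_mult, Rabs_right, (Rabs_right (a * w)) by (try apply Rle_ge, pow2_ge_0; lra).
  pose proof (tanh_sqr_le_abs (a * w * z + B)).
  assert (Rabs (a * w * z + B) <= a * w * Rabs z + B).
  { eapply Rle_trans; [apply Rabs_triang|]. rewrite Rabs_mult, (Rabs_right (a * w)), (Rabs_right B) by lra. lra. }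
  assert (tanh (a * w * z + B) ^ 2 * (a * w) <= (a * w * Rabs z + B) * (a * w))
    by (apply Rmult_le_compat_r; lra).
  nra.
Qed.

(* Here (a W)^2 tanh^2 need not be O(B) in mean, so the tail bound is needed. *)
Lemma sech2_mean_W2_near L e : 0 <= L -> 0 < e -> exists d, 0 < d /\
  forall z B, 0 < B < d -> Rabs z <= L * B -> Rabs (sech2_mean_W2 z B - a ^ 2 * EW2 Q) <= e.
Proof.
  intros HL He.
  destruct (Expect_tail_bound Q HQ (a ^ 2) (e / 3) ltac:(nra) ltac:(lra)) as [K [HK Htail]].
  set (c := (a * K * L + 1) ^ 2 * (a ^ 2 * K ^ 2)).
  assert (Hc : 0 <= c) by (unfold c; apply Rmult_le_pos; [apply pow2_ge_0|nra]).
  destruct (small_mul_lt c (e / 3) Hc ltac:(lra)) as [d [Hd P]].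
  exists (Rmin 1 d). split; [apply Rmin_glb_lt; lra|].
  intros z B HB Hz. pose proof (Rmin_l 1 d). pose proof (Rmin_r 1 d).
  unfold sech2_mean_W2, EW2. rewrite <- Expect_scal, <- Expect_sub by (auto; solve_admissible).
  replace e with (3 * (e / 3)) by field.
  assert (Hpt : forall w, Rabs ((1 - tanh (a * w * z + B) ^ 2) * (a ^ 2 * w ^ 2) - a ^ 2 * w ^ 2)
                          = tanh (a * w * z + B) ^ 2 * (a ^ 2 * w ^ 2)).
  { intros w. replace ((1 - tanh (a * w * z + B) ^ 2) * (a ^ 2 * w ^ 2) - a ^ 2 * w ^ 2)
      with (- (tanh (a * w * z + B) ^ 2 * (a ^ 2 * w ^ 2))) by ring.
    rewrite Rabs_Ropp, Rabs_right; [reflexivity|]. apply Rle_ge. pose proof (pow2_ge_0 w). nra. }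
  apply Htail; [solve_locally_lipschitz| |].
  - intros w Hw. rewrite Hpt. pose proof (sech2_bound (a * w * z + B)). nra.
  - intros w Hw. rewrite Hpt.
    assert (X1 : Rabs (a * w * z + B) <= (a * K * L + 1) * B).
    { eapply Rle_trans; [apply Rabs_triang|].
      rewrite Rabs_mult, (Rabs_right (a * w)), (Rabs_right B) by nra.
      assert (a * w * Rabs z <= a * K * (L * B))
        by (apply Rmult_le_compat; [nra|apply Rabs_pos|apply Rmult_le_compat_l; lra|lra]).
      nra. }
    assert (X2 : tanh (a * w * z + B) ^ 2 <= ((a * K * L + 1) * B) ^ 2).
    { eapply Rle_trans; [apply tanh_sqr_le|]. rewrite <- (pow2_abs (a * w * z + B)).
      pose proof (Rabs_pos (a * w * z + B)). apply pow_incr. lra. }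
    assert (X3 : a ^ 2 * w ^ 2 <= a ^ 2 * K ^ 2) by (apply Rmult_le_compat_l; nra).
    apply Rle_trans with (((a * K * L + 1) * B) ^ 2 * (a ^ 2 * K ^ 2));
      [apply Rmult_le_compat; try apply pow2_ge_0; nra|].
    specialize (P B ltac:(lra)). unfold c in *.
    replace (((a * K * L + 1) * B) ^ 2 * (a ^ 2 * K ^ 2))
      with ((a * K * L + 1) ^ 2 * (a ^ 2 * K ^ 2) * (B * B)) by ring.
    assert ((a * K * L + 1) ^ 2 * (a ^ 2 * K ^ 2) * (B * B) <= (a * K * L + 1) ^ 2 * (a ^ 2 * K ^ 2) * B)
      by (apply Rmult_le_compat_l; [exact Hc|nra]).
    lra.
Qed.

Section Subcritical.

Hypothesis Hsub : a ^ 2 * EW2 Q < 1.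

Lemma fixed_point_exists B : 0 < B -> exists z, 0 < z /\ z = Fmap z B.
Proof.
  intros HB. pose proof (EW_pos Q HQ) as Hm. pose proof (EW2_pos Q HQ).
  set (phi := fun z => z - Fmap z B).
  assert (Hc : continuity phi).
  { intros x eps He. exists (eps / 2). split; [lra|]. intros y [_ Hy]. simpl in *. unfold R_dist in *.
    unfold phi. pose proof (Fmap_lipschitz_z y x B).
    replace (y - Fmap y B - (x - Fmap x B)) with ((y - x) - (Fmap y B - Fmap x B)) by ring.
    eapply Rle_lt_trans; [apply Rabs_triang|]. rewrite Rabs_Ropp.
    pose proof (Rabs_pos (y - x)). nra. }
  assert (H0 : phi 0 < 0).
  { unfold phi. rewrite Fmap_0. pose proof (tanh_pos B HB). assert (0 < a * EW Q) by nra. nra. }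
  assert (H1 : 0 < phi (a * EW Q + 1)) by (unfold phi; pose proof (Fmap_le (a * EW Q + 1) B); lra).
  destruct (IVT phi 0 (a * EW Q + 1) Hc ltac:(nra) H0 H1) as [z [Hz Hz0]].
  exists z. unfold phi in Hz0. split; [|lra].
  destruct (Req_dec z 0) as [->|E]; [unfold phi in H0; lra|lra].
Qed.

Lemma fixed_point_lipschitz z B z' B' : z = Fmap z B -> z' = Fmap z' B' ->
  Rabs (z' - z) <= a * EW Q / (1 - a ^ 2 * EW2 Q) * Rabs (B' - B).
Proof.
  intros H1 H2.
  pose proof (Fmap_lipschitz_z z' z B'). pose proof (Fmap_lipschitz_B z B' B).
  assert (Rabs (z' - z) <= a ^ 2 * Rabs (z' - z) * EW2 Q + a * Rabs (B' - B) * EW Q).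
  { replace (z' - z) with ((Fmap z' B' - Fmap z B') + (Fmap z B' - Fmap z B)) at 1 by lra.
    eapply Rle_trans; [apply Rabs_triang|lra]. }
  apply Rmult_le_reg_l with (1 - a ^ 2 * EW2 Q); [lra|].
  replace ((1 - a ^ 2 * EW2 Q) * (a * EW Q / (1 - a ^ 2 * EW2 Q) * Rabs (B' - B)))
    with (a * Rabs (B' - B) * EW Q) by (field; lra).
  lra.
Qed.

Lemma fixed_point_bound z B : 0 <= B -> z = Fmap z B ->
  Rabs z <= a * EW Q / (1 - a ^ 2 * EW2 Q) * B.
Proof.
  intros HB Hz. assert (H00 : 0 = Fmap 0 0) by (rewrite Fmap_0, tanh_0; ring).
  pose proof (fixed_point_lipschitz 0 0 z B H00 Hz) as Hzl.
  rewrite !Rminus_0_r, (Rabs_right B) in Hzl by lra. exact Hzl.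
Qed.

(* With e1 the error of the linearised fixed-point equation and e2 that of M, the increment of
   M minus (B' - B) chi equals s e1 / (1 - p) + e2. *)
Lemma Mmap_increment eta : 0 < eta -> exists delta, 0 < delta /\
  forall z B z' B', z = Fmap z B -> z' = Fmap z' B' -> B' <> B -> Rabs (B' - B) < delta ->
  Rabs (Mmap z' B' - Mmap z B - (B' - B) * chi_of z B)
  <= a * EW Q * (3 * eta) / (1 - a ^ 2 * EW2 Q) * Rabs (B' - B)
     + 4 * (a ^ 2 * EW2 Q * (a * EW Q / (1 - a ^ 2 * EW2 Q)) ^ 2 + 1) * Rabs (B' - B) ^ 2.
Proof.
  intros Heta. pose proof (EW_pos Q HQ) as Hm. pose proof (Rlt_le _ _ (EW2_pos Q HQ)) as Hs2.
  set (S := a ^ 2 * EW2 Q) in *. set (L := a * EW Q / (1 - S)).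
  assert (HL : 0 <= L) by (unfold L; apply Rle_mult_inv_pos; [nra|lra]).
  destruct (Fmap_expand L HL eta Heta) as [delta [Hdelta P1]].
  exists delta. split; auto. intros z B z' B' Hz Hz' HB Hh.
  pose proof (fixed_point_lipschitz z B z' B' Hz Hz') as Hlip. fold S L in Hlip.
  specialize (P1 z B z' B' HB Hlip Hh). rewrite <- Hz, <- Hz' in P1.
  pose proof (Mmap_expand z B z' B') as P2.
  pose proof (sech2_mean_W2_bounds z B) as Hp. pose proof (sech2_mean_W_bounds z B) as Hs.
  unfold chi_of. fold S in Hp.
  set (p := sech2_mean_W2 z B) in *. set (s := sech2_mean_W z B) in *. set (t := sech2_mean z B) in *.
  set (dz := z' - z) in *. set (h := B' - B) in *.
  set (e1 := dz - dz * p - h * s) in *.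
  set (e2 := Mmap z' B' - Mmap z B - dz * s - h * t) in *.
  replace (Mmap z' B' - Mmap z B - h * (t + s ^ 2 / (1 - p))) with (s * e1 / (1 - p) + e2)
    by (unfold e1, e2; field; lra).
  eapply Rle_trans; [apply Rabs_triang|]. apply Rplus_le_compat.
  - unfold Rdiv. rewrite !Rabs_mult, Rabs_inv, (Rabs_right s), (Rabs_right (1 - p)) by lra.
    assert (/ (1 - p) <= / (1 - S)) by (apply Rinv_le_contravar; lra).
    assert (0 < / (1 - p)) by (apply Rinv_0_lt_compat; lra).
    assert (s * Rabs e1 <= a * EW Q * (3 * eta * Rabs h))
      by (apply Rmult_le_compat; [lra|apply Rabs_pos|lra|lra]).
    apply Rle_trans with (a * EW Q * (3 * eta * Rabs h) * / (1 - S));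
      [apply Rmult_le_compat; [apply Rmult_le_pos; [lra|apply Rabs_pos]|lra|lra|lra]|].
    right. field. lra.
  - eapply Rle_trans; [apply P2|].
    assert (dz ^ 2 <= L ^ 2 * Rabs h ^ 2).
    { rewrite <- (pow2_abs dz). pose proof (Rabs_pos dz). pose proof (Rabs_pos h). nra. }
    rewrite <- (pow2_abs h). assert (0 <= S) by (unfold S; nra). fold S. nra.
Qed.

Lemma Mmap_derivable zf B : (forall b, 0 < b -> zf b = Fmap (zf b) b) -> 0 < B ->
  derivable_pt_lim (fun b => Mmap (zf b) b) B (chi_of (zf B) B).
Proof.
  intros Hfix HB eps Heps. pose proof (EW_pos Q HQ) as Hm. pose proof (Rlt_le _ _ (EW2_pos Q HQ)) as Hs2.
  set (m := EW Q) in *. set (S := a ^ 2 * EW2 Q) in *. set (L := a * m / (1 - S)).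
  set (C2 := 4 * (S * L ^ 2 + 1)).
  assert (HS : 0 <= S) by (unfold S; apply Rmult_le_pos; [apply pow2_ge_0|lra]).
  assert (HC2 : 0 < C2)
    by (unfold C2; assert (0 <= S * L ^ 2) by (apply Rmult_le_pos; [lra|apply pow2_ge_0]); lra).
  set (eta := eps * (1 - S) / (6 * (a * m + 1))).
  assert (Heta : 0 < eta) by (unfold eta; apply Rdiv_lt_0_compat; nra).
  destruct (Mmap_increment eta Heta) as [d1 [Hd1 P]].
  assert (Hd2 : 0 < eps / (2 * C2)) by (apply Rdiv_lt_0_compat; lra).
  set (d := Rmin d1 (Rmin (B / 2) (eps / (2 * C2)))).
  pose proof (Rmin_l d1 (Rmin (B / 2) (eps / (2 * C2)))) as Hd1'.
  pose proof (Rmin_r d1 (Rmin (B / 2) (eps / (2 * C2)))) as Hd2'. fold d in Hd1', Hd2'.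
  pose proof (Rmin_l (B / 2) (eps / (2 * C2))). pose proof (Rmin_r (B / 2) (eps / (2 * C2))).
  assert (Hd : 0 < d) by (repeat apply Rmin_glb_lt; lra).
  exists (mkposreal d Hd). intros h Hh0 Hh. simpl in Hh.
  assert (Hhpos : 0 < Rabs h) by (apply Rabs_pos_lt; auto).
  assert (HBh : 0 < B + h) by (apply Rabs_def2 in Hh; lra).
  specialize (P (zf B) B (zf (B + h)) (B + h) (Hfix B HB) (Hfix (B + h) HBh) ltac:(lra)
                ltac:(replace (B + h - B) with h by ring; lra)).
  replace (B + h - B) with h in P by ring. fold m S L C2 in P.
  replace ((Mmap (zf (B + h)) (B + h) - Mmap (zf B) B) / h - chi_of (zf B) B)
    with ((Mmap (zf (B + h)) (B + h) - Mmap (zf B) B - h * chi_of (zf B) B) / h) by (field; lra).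
  unfold Rdiv. rewrite Rabs_mult, Rabs_inv.
  apply Rmult_lt_reg_r with (Rabs h); [lra|].
  rewrite Rmult_assoc, Rinv_l, Rmult_1_r by lra.
  eapply Rle_lt_trans; [exact P|].
  assert (A1 : a * m * (3 * eta) / (1 - S) <= eps / 2).
  { replace (a * m * (3 * eta) / (1 - S)) with (eps / 2 * (a * m / (a * m + 1))) by (unfold eta; field; nra).
    assert (a * m / (a * m + 1) <= 1)
      by (apply Rmult_le_reg_r with (a * m + 1); [nra|]; unfold Rdiv; rewrite Rmult_assoc, Rinv_l by nra; nra).
    assert (0 <= a * m / (a * m + 1)) by (apply Rle_mult_inv_pos; nra). nra. }
  assert (A2 : C2 * Rabs h < eps / 2).
  { apply Rlt_le_trans with (C2 * (eps / (2 * C2))); [apply Rmult_lt_compat_l; lra|].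
    right; field; lra. }
  simpl. nra.
Qed.

Lemma chi_of_limit zf : (forall b, 0 < b -> zf b = Fmap (zf b) b) ->
  forall eps, 0 < eps -> exists d, 0 < d /\ forall B, 0 < B < d ->
    Rabs (chi_of (zf B) B - (1 + (a * EW Q) ^ 2 / (1 - a ^ 2 * EW2 Q))) < eps.
Proof.
  intros Hfix eps Heps. pose proof (EW_pos Q HQ) as Hm. pose proof (Rlt_le _ _ (EW2_pos Q HQ)) as Hs2.
  set (m := EW Q) in *. set (s2 := EW2 Q) in *. set (S := a ^ 2 * s2) in *.
  assert (HS : 0 <= S) by (unfold S; apply Rmult_le_pos; [apply pow2_ge_0|lra]).
  set (L := a * m / (1 - S)). assert (HL : 0 <= L) by (unfold L; apply Rle_mult_inv_pos; [nra|lra]).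
  set (s0 := a * m). assert (Hs0 : 0 < s0) by (unfold s0; nra).
  set (e1 := eps / 4). set (e2 := eps / 4 * (1 - S) / (2 * s0)).
  set (e3 := eps / 4 * (1 - S) ^ 2 / s0 ^ 2).
  assert (He2 : 0 < e2) by (unfold e2; apply Rdiv_lt_0_compat; nra).
  assert (He3 : 0 < e3) by (unfold e3; apply Rdiv_lt_0_compat; [apply Rmult_lt_0_compat; [lra|nra]|nra]).
  assert (Hsum : e1 + 2 * s0 * e2 / (1 - S) + s0 ^ 2 * e3 / (1 - S) ^ 2 < eps)
    by (replace (e1 + 2 * s0 * e2 / (1 - S) + s0 ^ 2 * e3 / (1 - S) ^ 2) with (3 * eps / 4)
          by (unfold e1, e2, e3; field; lra); lra).
  set (c1 := 2 * a ^ 2 * L ^ 2 * s2 + 2). set (c2 := a ^ 2 * L * s2 + a * m).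
  assert (Hc1 : 0 <= c1) by (unfold c1; assert (0 <= a ^ 2 * L ^ 2 * s2) by (apply Rmult_le_pos; nra); lra).
  assert (Hc2 : 0 <= c2) by (unfold c2; assert (0 <= a ^ 2 * L * s2) by (apply Rmult_le_pos; nra); nra).
  destruct (small_mul_lt c1 e1 Hc1 ltac:(unfold e1; lra)) as [d1 [Hd1 P1]].
  destruct (small_mul_lt c2 e2 Hc2 He2) as [d2 [Hd2 P2]].
  destruct (sech2_mean_W2_near L e3 HL He3) as [d3 [Hd3 P3]].
  exists (Rmin 1 (Rmin d1 (Rmin d2 d3))). split; [repeat (apply Rmin_glb_lt; auto); lra|].
  intros B [HB0 HB].
  pose proof (Rmin_l 1 (Rmin d1 (Rmin d2 d3))). pose proof (Rmin_r 1 (Rmin d1 (Rmin d2 d3))).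
  pose proof (Rmin_l d1 (Rmin d2 d3)). pose proof (Rmin_r d1 (Rmin d2 d3)).
  pose proof (Rmin_l d2 d3). pose proof (Rmin_r d2 d3).
  specialize (P1 B ltac:(lra)). specialize (P2 B ltac:(lra)).
  set (z := zf B).
  assert (Hz : Rabs z <= L * B) by (apply fixed_point_bound, Hfix; lra).
  pose proof (sech2_mean_W2_bounds z B) as Hp. pose proof (sech2_mean_W_bounds z B) as Hsb.
  fold m s2 in Hp, Hsb. fold S in Hp. fold s0 in Hsb.
  eapply Rle_lt_trans; [|exact Hsum]. unfold chi_of.
  apply chi_formula_perturbation; try lra.
  - eapply Rle_trans; [apply (sech2_mean_near_1 L); [lra|exact Hz]|]. unfold c1 in P1. fold s2. lra.
  - eapply Rle_trans; [apply (sech2_mean_W_near L); [lra|exact Hz]|]. unfold c2 in P2. fold m s2. lra.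
  - apply P3; [lra|exact Hz].
Qed.

End Subcritical.

End MeanField.

(** * Behaviour at the critical point *)

Lemma is_lim_sinh_difference_quotient x0 :
  is_lim (fun x => (sinh x - sinh x0) / (x - x0)) x0 (cosh x0).
Proof.
  apply is_lim_spec. intros eps. destruct (derivable_pt_lim_sinh x0 eps (cond_pos eps)) as [d Hd].
  exists d. intros y Hy Hyx. change (Rabs (y - x0) < d) in Hy.
  specialize (Hd (y - x0) (Rminus_eq_contra _ _ Hyx) Hy). rewrite Rplus_minus in Hd. exact Hd.
Qed.

(* 1 - (s2/m) sinh beta = (s2/m) (sinh bc - sinh beta), and the difference quotient of sinh
   tends to cosh bc. *)
Lemma is_lim_susceptibility_times_gap m s2 bc : 0 < m -> 0 < s2 -> sinh bc = m / s2 ->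
  is_lim (fun beta => (1 + sinh beta * m / (1 - sinh beta * s2 / m)) * (bc - beta)) bc
    (m ^ 2 / s2 * tanh bc).
Proof.
  intros Hm Hs2 Hbc. pose proof (cosh_ge1 bc).
  set (q := fun x => (sinh x - sinh bc) / (x - bc)).
  apply (is_lim_ext_loc (fun beta => (bc - beta) + m ^ 2 / s2 * sinh beta * / q beta)).
  - exists (mkposreal 1 Rlt_0_1). intros beta _ Hb.
    assert (sinh beta <> sinh bc).
    { destruct (Rtotal_order beta bc) as [H'|[H'|H']]; [|lra|];
        [apply sinh_lt in H'|apply sinh_lt in H']; lra. }
    unfold q.
    replace (1 - sinh beta * s2 / m) with (s2 / m * (sinh bc - sinh beta)) by (rewrite Hbc; field; lra).
    field. repeat split; lra.
  - replace (m ^ 2 / s2 * tanh bc) with (0 + m ^ 2 / s2 * sinh bc * / cosh bc)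
      by (unfold tanh; field; lra).
    apply is_lim_plus'.
    + replace 0 with (bc - bc) by ring. apply is_lim_minus'; [apply is_lim_const|apply is_lim_id].
    + apply (is_lim_mult _ _ bc (m ^ 2 / s2 * sinh bc) (/ cosh bc)); [| |simpl; auto].
      * apply (is_lim_scal_l sinh (m ^ 2 / s2) bc (sinh bc)).
        apply is_lim_continuity. apply derivable_continuous_pt. apply derivable_pt_sinh.
      * apply (is_lim_inv q bc (cosh bc)); [apply is_lim_sinh_difference_quotient|].
        intro E. injection E. lra.
Qed.

Lemma is_lim_left_eps (f : R -> R) (x0 l : R) : is_lim f x0 l -> forall eps, 0 < eps ->
  exists d, 0 < d /\ forall x, x0 - d < x < x0 -> Rabs (f x - l) < eps.
Proof.
  intros Hf eps Heps. apply is_lim_spec in Hf.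
  destruct (Hf (mkposreal eps Heps)) as [d Hd].
  exists d. split; [apply cond_pos|]. intros x Hx. apply Hd; [|lra].
  change (Rabs (x - x0) < d). rewrite Rabs_left; lra.
Qed.

(** * The susceptibility of the annealed Ising model *)

Lemma sinh_beta_c Q : weight_law Q -> sinh (beta_c Q) = EW Q / EW2 Q.
Proof.
  intros HQ. pose proof (EW_pos Q HQ). pose proof (EW2_pos Q HQ).
  unfold beta_c, nu. rewrite sinh_arcsinh. field. lra.
Qed.

Lemma alpha_sqr Q beta : weight_law Q -> 0 <= beta -> alpha Q beta ^ 2 = sinh beta / EW Q.
Proof.
  intros HQ Hb. pose proof (EW_pos Q HQ).
  assert (0 <= sinh beta) by (rewrite <- sinh_0; destruct Hb as [Hb| <-]; [left; apply sinh_lt|]; lra).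
  unfold alpha. rewrite <- Rsqr_pow2. apply Rsqr_sqrt. apply Rle_mult_inv_pos; lra.
Qed.

Lemma alpha_subcritical Q beta : weight_law Q -> 0 < beta < beta_c Q ->
  0 < alpha Q beta /\ alpha Q beta ^ 2 * EW2 Q < 1.
Proof.
  intros HQ [H1 H2]. pose proof (EW_pos Q HQ). pose proof (EW2_pos Q HQ).
  assert (0 < sinh beta) by (rewrite <- sinh_0; apply sinh_lt; auto).
  assert (sinh beta < EW Q / EW2 Q) by (rewrite <- sinh_beta_c by auto; apply sinh_lt; auto).
  split; [apply sqrt_lt_R0, Rdiv_lt_0_compat; auto|].
  rewrite alpha_sqr by (auto; lra).
  apply Rmult_lt_reg_r with (EW Q / EW2 Q); [apply Rdiv_lt_0_compat; lra|].
  replace (sinh beta / EW Q * EW2 Q * (EW Q / EW2 Q)) with (sinh beta) by (field; lra). lra.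
Qed.

Lemma alpha_susceptibility_sinh Q beta : weight_law Q -> 0 <= beta ->
  (alpha Q beta * EW Q) ^ 2 / (1 - alpha Q beta ^ 2 * EW2 Q)
  = sinh beta * EW Q / (1 - sinh beta * EW2 Q / EW Q).
Proof.
  intros HQ Hb. pose proof (EW_pos Q HQ). rewrite Rpow_mult_distr, alpha_sqr by auto.
  replace (sinh beta / EW Q * EW Q ^ 2) with (sinh beta * EW Q) by (field; lra).
  replace (sinh beta / EW Q * EW2 Q) with (sinh beta * EW2 Q / EW Q) by (field; lra).
  reflexivity.
Qed.

Lemma zstar_fixed_point Q beta B : weight_law Q -> 0 < alpha Q beta ->
  alpha Q beta ^ 2 * EW2 Q < 1 -> 0 < B ->
  zstar Q beta B = Fmap Q (alpha Q beta) (zstar Q beta B) B.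
Proof.
  intros HQ Ha Hsub HB. unfold zstar.
  apply (epsilon_spec (inhabits 0) (fun z => 0 < z /\ z = Fmap Q (alpha Q beta) z B)).
  apply fixed_point_exists; auto.
Qed.

Theorem mainTheorem4 (Q : R -> R)
  (HQ : is_quantile Q)
  (HW2 : exists m2, improper01 (fun u => Q u ^ 2) m2)
  (HW : exists m1, 0 < m1 /\ improper01 (fun u => Q u) m1) :
  exists (chi : R -> R -> R) (chi0 : R -> R),
    (* chi beta B = d/dB Mtilde(beta,B), the annealed susceptibility *)
    (forall beta B, 0 < beta < beta_c Q -> 0 < B ->
       derivable_pt_lim (fun b => Mtilde Q beta b) B (chi beta B)) /\
    (* chi0 beta = chi(beta, 0+) *)
    (forall beta, 0 < beta < beta_c Q ->
       forall eps, 0 < eps -> exists d, 0 < d /\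
         forall B, 0 < B < d -> Rabs (chi beta B - chi0 beta) < eps) /\
    (* lim_{beta -> beta_c^-} chi(beta,0+) (beta_c - beta) *)
    (forall eps, 0 < eps -> exists d, 0 < d /\
       forall beta, beta_c Q - d < beta < beta_c Q ->
         Rabs (chi0 beta * (beta_c Q - beta)
               - (EW Q) ^ 2 / EW2 Q * tanh (beta_c Q)) < eps).
Proof.
  assert (HL : weight_law Q) by (split; [|split]; auto).
  pose proof (EW_pos Q HL) as Hm. pose proof (EW2_pos Q HL) as Hm2.
  exists (fun beta B => chi_of Q (alpha Q beta) (zstar Q beta B) B).
  exists (fun beta => 1 + sinh beta * EW Q / (1 - sinh beta * EW2 Q / EW Q)).
  split; [|split].
  - intros beta B Hb HB. destruct (alpha_subcritical Q beta HL Hb) as [Ha Hsub].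
    apply (Mmap_derivable Q HL _ Ha Hsub); auto.
    intros b Hb0. apply zstar_fixed_point; auto.
  - intros beta Hb eps Heps. destruct (alpha_subcritical Q beta HL Hb) as [Ha Hsub].
    rewrite <- alpha_susceptibility_sinh by (auto; lra).
    apply (chi_of_limit Q HL _ Ha Hsub); auto.
    intros b Hb0. apply zstar_fixed_point; auto.
  - apply is_lim_left_eps. apply is_lim_susceptibility_times_gap; auto.
    apply sinh_beta_c, HL.
Qed.
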